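(* Fix $a\in(0,\tfrac12)$, $\gamma\in(-\sqrt{2a(1-2a)},0)$ and $\lambda\le-1+a$. Suppose there exist $0\le E_1<E_2<1$ such that the $\Omega$-flow described in the context has corridors $\mathcal K_1(E_1,\lambda)$ and $\mathcal K_1(E_2,\lambda)$ with $w(\mathcal K_1(E_1,\lambda))=0$ and $w(\mathcal K_1(E_2,\lambda))\ge1$. Then there is $E\in(E_1,E_2)$ such that the $\Omega$-flow with parameters $(E,\lambda)$ has a saddles connector.
   Context: For $a\in(0,\tfrac12)$, $\gamma\in(-\sqrt{2a(1-2a)},0)$, $E\in[0,1)$, $\lambda\in\mathbb R$, the $\Omega$-flow is the system on the strip $[-\tfrac\pi2,\tfrac\pi2]\times\mathbb R$ (with $\Omega$ understood mod $2\pi$ on the cylinder) $$\dot\xi=\cos^2\xi,\qquad \dot\Omega=2a\sin\xi\cos\Omega+2\lambda\cos\xi\sin\Omega+2\gamma\sin\xi\cos\xi+\cos^2\xi-2aE.$$ With $\arccos$ the principal branch in $[0,\pi]$, its equilibria are $\tilde S_-=(-\tfrac\pi2,-\pi+\arccos E)$, $N_-=(-\tfrac\pi2,\pi-\arccos E)$, $\tilde S_+=(\tfrac\pi2,-\arccos E)$, $N_+=(\tfrac\pi2,\arccos E)$ and their $2\pi$-translates in $\Omega$. Let $\widetilde{\mathcal W}^-$ be the unique orbit in the open strip with $\alpha$-limit $\tilde S_-$ and $\widetilde{\mathcal W}^+$ the unique orbit with $\omega$-limit $\tilde S_+$. A saddles connector is an orbit with $\alpha$-limit $\tilde S_-$ and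 $\omega$-limit $\tilde S_+$ (i.e. $\widetilde{\mathcal W}^-=\widetilde{\mathcal W}^+$). The flow has a corridor $\mathcal K_1(E,\lambda)$ of winding number $k\in\mathbb Z$ if $\widetilde{\mathcal W}^-\neq\widetilde{\mathcal W}^+$ and the $\omega$-limit of $\widetilde{\mathcal W}^-$ is $(\tfrac\pi2,\arccos E-2\pi k)$. *)

From Stdlib Require Import Reals ZArith.
From Coquelicot Require Import Coquelicot.
Open Scope R_scope.

Definition xi_field (xi : R) : R := (cos xi) ^ 2.

Definition Om_field (a gam lam E xi Om : R) : R :=
  2 * a * sin xi * cos Om + 2 * lam * cos xi * sin Om
  + 2 * gam * sin xi * cos xi + (cos xi) ^ 2 - 2 * a * E.

(** A (lifted, Omega in R) orbit of the Omega-flow lying in the open strip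
    (-pi/2, pi/2) x R, parametrised by time t in R. *)
Definition is_orbit (a gam lam E : R) (x w : R -> R) : Prop :=
  forall t : R,
    - PI / 2 < x t < PI / 2 /\
    is_derive x t (xi_field (x t)) /\
    is_derive w t (Om_field a gam lam E (x t) (w t)).

Definition alpha_limit (x w : R -> R) (p q : R) : Prop :=
  is_lim x m_infty p /\ is_lim w m_infty q.

Definition omega_limit (x w : R -> R) (p q : R) : Prop :=
  is_lim x p_infty p /\ is_lim w p_infty q.

(** Saddles connector: an orbit with alpha-limit S~_- = (-pi/2, -pi + arccos E)
    and omega-limit S~_+ = (pi/2, -arccos E) on the cylinder, i.e. some
    2pi-translate of it in the lift. *)
Definition saddles_connector (a gam lam E : R) : Prop :=
  exists x w : R -> R,
    is_orbit a gam lam E x w /\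
    alpha_limit x w (- PI / 2) (- PI + acos E) /\
    exists m : Z, omega_limit x w (PI / 2) (- acos E + 2 * PI * IZR m).

(** Corridor K_1(E, lambda) of winding number k: W~^- <> W~^+ (no saddles
    connector) and the orbit W~^- (alpha-limit S~_-, lifted so that its
    Omega tends to -pi + arccos E) has omega-limit (pi/2, arccos E - 2 pi k). *)
Definition corridor (a gam lam E : R) (k : Z) : Prop :=
  ~ saddles_connector a gam lam E /\
  exists x w : R -> R,
    is_orbit a gam lam E x w /\
    alpha_limit x w (- PI / 2) (- PI + acos E) /\
    omega_limit x w (PI / 2) (acos E - 2 * PI * IZR k).

(* Writing the xi-orbits as xi = atan t turns the Omega-equation into a scalar
   ODE y' = F_E(t, y), globally Lipschitz in y.  As t -> -oo the field tends to
   -2a cos y - 2aE, for which the saddle level -PI + acos E is attracting; this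
   contraction yields, for each energy E in [0, E2], a unique solution W_E with
   that alpha-limit (the branch W~^-, a limit of solutions started on the saddle
   level at times -n), and makes W_E t depend continuously on E.  As t -> +oo the
   field tends to 2a cos y - 2aE and the level -acos E of S~_+ repels: once W_E is
   a definite distance above (below) it, it stays above (below).  These two escape
   conditions are disjoint and open in E; the corridor of winding 0 escapes above
   at E1 and the corridor of winding >= 1 escapes below at E2, so by connectedness
   some E in (E1, E2) escapes neither way, and there W_E is a saddles connector. *)

From Stdlib Require Import Reals ZArith Lra Lia Classical.
From Coquelicot Require Import Coquelicot.
Open Scope R_scope.

Lemma continuity_pt_of_is_derive (f : R -> R) (x l : R) :
  is_derive f x l -> continuity_pt f x.
Proof.
  intros Hf. apply derivable_continuous_pt. exists l. now apply is_derive_Reals.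
Qed.

Lemma exp_le_mono (x y : R) : x <= y -> exp x <= exp y.
Proof. intros [Hlt | ->]; [left; now apply exp_increasing | lra]. Qed.

Lemma one_le_exp (x : R) : 0 <= x -> 1 <= exp x.
Proof. intros Hx. pose proof (exp_ineq1_le x). lra. Qed.

Lemma exp_mult_INR (k : R) (m : nat) : exp (k * INR m) = exp k ^ m.
Proof.
  induction m as [| m IH]; [simpl; rewrite Rmult_0_r; apply exp_0 |].
  rewrite S_INR, Rmult_plus_distr_l, Rmult_1_r, exp_plus, IH. simpl. ring.
Qed.

Lemma le_of_derive_nonneg (f df : R -> R) (a b : R) :
  (forall x, is_derive f x (df x)) -> a <= b ->
  (forall x, a <= x <= b -> 0 <= df x) -> f a <= f b.
Proof.
  intros Hf Hab Hdf.
  destruct (MVT_gen f a b df) as [c [Hc Hfc]].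
  - intros x _. apply Hf.
  - intros x _. apply (continuity_pt_of_is_derive f x (df x)), Hf.
  - rewrite Rmin_left, Rmax_right in Hc by lra.
    assert (0 <= df c * (b - a)) by (apply Rmult_le_pos; [apply Hdf|]; lra).
    lra.
Qed.

Lemma Rabs_sub_le_of_derive_dominated (g dg h dh : R -> R) (a b : R) :
  (forall x, is_derive g x (dg x)) -> (forall x, is_derive h x (dh x)) -> a <= b ->
  (forall x, a <= x <= b -> Rabs (dg x) <= dh x) ->
  Rabs (g b - g a) <= h b - h a.
Proof.
  intros Hg Hh Hab Hdom.
  assert (Hminus : h a - g a <= h b - g b).
  { apply (le_of_derive_nonneg (fun x => h x - g x) (fun x => dh x - dg x)); auto.
    - intros x. now apply (is_derive_minus h g).
    - intros x Hx. specialize (Hdom x Hx). apply Rabs_le_between in Hdom. lra. }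
  assert (Hplus : h a + g a <= h b + g b).
  { apply (le_of_derive_nonneg (fun x => h x + g x) (fun x => dh x + dg x)); auto.
    - intros x. now apply (is_derive_plus h g).
    - intros x Hx. specialize (Hdom x Hx). apply Rabs_le_between in Hdom. lra. }
  apply Rabs_le_between. lra.
Qed.

Lemma gronwall (h dh : R -> R) (K s t : R) :
  (forall x, is_derive h x (dh x)) -> s <= t ->
  (forall u, s <= u <= t -> dh u <= K * h u) ->
  h t <= exp (K * (t - s)) * h s.
Proof.
  intros Hh Hst Hdh.
  set (g u := - (exp (K * (t - u)) * h u)).
  assert (Hg : forall u, is_derive g u (exp (K * (t - u)) * (K * h u - dh u))).
  { intros u. unfold g.
    replace (exp (K * (t - u)) * (K * h u - dh u))
      with (- ((- K * exp (K * (t - u))) * h u + exp (K * (t - u)) * dh u)) by ring.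
    apply (is_derive_opp (fun u => exp (K * (t - u)) * h u)).
    apply (is_derive_mult (fun u => exp (K * (t - u))) h); [| apply Hh | apply Rmult_comm].
    auto_derive; [exact I | unfold Rminus; ring]. }
  assert (Hgst : g s <= g t).
  { apply (le_of_derive_nonneg g _ s t Hg Hst).
    intros u Hu. specialize (Hdh u Hu).
    apply Rmult_le_pos; [left; apply exp_pos | lra]. }
  unfold g in Hgst. rewrite Rminus_eq_0, Rmult_0_r, exp_0 in Hgst. lra.
Qed.

Lemma continuity_pt_eps (f : R -> R) (x : R) : continuity_pt f x ->
  forall eps, 0 < eps -> exists d, 0 < d /\ forall y, Rabs (y - x) < d -> Rabs (f y - f x) < eps.
Proof.
  intros Hf eps Heps. destruct (Hf eps Heps) as [d [Hd Hfd]]. exists d. split; [exact Hd |].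
  intros y Hy. destruct (Req_dec y x) as [-> | Hyx].
  - rewrite Rminus_eq_0, Rabs_R0. exact Heps.
  - apply (Hfd y). split; [split; [exact I | auto] | exact Hy].
Qed.

Lemma lt_right_of_derive_neg (f : R -> R) (x l : R) : is_derive f x l -> l < 0 ->
  exists e, 0 < e /\ forall y, x < y < x + e -> f y < f x.
Proof.
  intros Hf Hl. apply is_derive_Reals in Hf.
  destruct (Hf (- l) ltac:(lra)) as [[d Hd] Hquot]. exists d. split; [exact Hd |].
  intros y Hy. specialize (Hquot (y - x) ltac:(lra)).
  rewrite Rabs_right in Hquot by lra. specialize (Hquot ltac:(simpl; lra)).
  replace (x + (y - x)) with y in Hquot by ring. apply Rabs_lt_between in Hquot.
  assert (Hneg : (f y - f x) / (y - x) < 0) by lra.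
  assert (Hprod : (f y - f x) / (y - x) * (y - x) < 0) by (apply Rmult_neg_pos; lra).
  field_simplify in Hprod; lra.
Qed.

Lemma continuous_induction (P : R -> Prop) (a b : R) :
  a <= b -> P a ->
  (forall x, a <= x < b -> P x -> exists e, 0 < e /\ forall y, x < y < x + e -> y <= b -> P y) ->
  (forall x, a < x <= b -> (forall y, a <= y < x -> P y) -> P x) ->
  P b.
Proof.
  intros Hab Pa Hstep Hclosed.
  set (A x := a <= x <= b /\ forall y, a <= y <= x -> P y).
  assert (Aa : A a) by (split; [lra | intros y Hy; now replace y with a by lra]).
  destruct (completeness A) as [s [Hub Hlub]].
  { exists b. intros x [Hx _]. lra. }
  { exists a. exact Aa. }
  assert (Has : a <= s) by (apply Hub, Aa).
  assert (Hsb : s <= b) by (apply Hlub; intros x [Hx _]; lra).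
  assert (Hbelow : forall y, a <= y < s -> P y).
  { intros y Hy. destruct (classic (exists x, A x /\ y <= x)) as [[x [[_ Hx] Hyx]] | Hno].
    - apply Hx. lra.
    - assert (s <= y); [| lra].
      apply Hlub. intros x Ax. destruct (Rle_or_lt x y) as [| Hxy]; [assumption |].
      exfalso. apply Hno. exists x. split; [exact Ax | lra]. }
  assert (Ps : P s).
  { destruct (Req_dec s a) as [-> | Hsa]; [exact Pa | apply Hclosed; [lra | exact Hbelow]]. }
  destruct (Req_dec s b) as [<- | Hsb']; [exact Ps |].
  destruct (Hstep s ltac:(lra) Ps) as [e [He Hnext]].
  set (x := Rmin (s + e / 2) b).
  assert (Hx : s < x <= b /\ x < s + e) by (unfold x, Rmin; destruct (Rle_dec (s + e / 2) b); lra).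
  assert (Ax : A x).
  { split; [lra |]. intros y Hy.
    destruct (Rlt_or_le s y) as [Hsy | Hys]; [apply Hnext; lra |].
    destruct (Req_dec y s) as [-> | Hys']; [exact Ps | apply Hbelow; lra]. }
  specialize (Hub x Ax). lra.
Qed.

Lemma barrier_le (y dy : R -> R) (t1 t2 th : R) :
  (forall t, is_derive y t (dy t)) -> t1 <= t2 -> y t1 <= th ->
  (forall t, t1 <= t <= t2 -> y t = th -> dy t < 0) -> y t2 <= th.
Proof.
  intros Hy H12 H1 Hcross.
  apply (continuous_induction (fun t => y t <= th) t1 t2 H12 H1).
  - intros x Hx Hyx. destruct Hyx as [Hlt | Heq].
    + destruct (continuity_pt_eps y x (continuity_pt_of_is_derive y x _ (Hy x)) (th - y x))
        as [d [Hd Hyd]]; [lra |].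
      exists d. split; [exact Hd |]. intros z Hz _.
      specialize (Hyd z ltac:(rewrite Rabs_right; lra)). apply Rabs_lt_between in Hyd. lra.
    + destruct (lt_right_of_derive_neg y x (dy x) (Hy x) (Hcross x ltac:(lra) Heq))
        as [e [He Hye]].
      exists e. split; [exact He |]. intros z Hz _. specialize (Hye z Hz). lra.
  - intros x Hx Hleft. destruct (Rle_or_lt (y x) th) as [| Hgt]; [assumption | exfalso].
    destruct (continuity_pt_eps y x (continuity_pt_of_is_derive y x _ (Hy x)) (y x - th))
      as [d [Hd Hyd]]; [lra |].
    set (z := Rmax t1 (x - d / 2)).
    assert (Hz : t1 <= z < x /\ Rabs (z - x) < d)
      by (unfold z, Rmax; destruct (Rle_dec t1 (x - d / 2)); rewrite Rabs_left; lra).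
    specialize (Hleft z ltac:(lra)). specialize (Hyd z (proj2 Hz)).
    apply Rabs_lt_between in Hyd. lra.
Qed.

Lemma barrier_ge (y dy : R -> R) (t1 t2 th : R) :
  (forall t, is_derive y t (dy t)) -> t1 <= t2 -> th <= y t1 ->
  (forall t, t1 <= t <= t2 -> y t = th -> 0 < dy t) -> th <= y t2.
Proof.
  intros Hy H12 H1 Hcross.
  enough (- y t2 <= - th) by lra.
  apply (barrier_le (fun t => - y t) (fun t => - dy t) t1 t2); [| lra | lra |].
  - intros t. now apply (is_derive_opp y).
  - intros t Ht Heq. specialize (Hcross t Ht ltac:(lra)). lra.
Qed.

Lemma interval_not_covered (U V : R -> Prop) (a b : R) :
  a <= b -> U a -> V b ->
  (forall x, a <= x <= b -> U x -> exists e, 0 < e /\ forall y, a <= y <= b -> Rabs (y - x) < e -> U y) ->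
  (forall x, a <= x <= b -> V x -> exists e, 0 < e /\ forall y, a <= y <= b -> Rabs (y - x) < e -> V y) ->
  (forall x, a <= x <= b -> U x -> V x -> False) ->
  exists x, a <= x <= b /\ ~ U x /\ ~ V x.
Proof.
  intros Hab Ua Vb HU HV Hdisj.
  apply NNPP. intros Hcover.
  assert (HUV : forall x, a <= x <= b -> U x \/ V x).
  { intros x Hx. destruct (classic (U x)); [now left |].
    destruct (classic (V x)); [now right |]. exfalso. apply Hcover. now exists x. }
  apply (Hdisj b ltac:(lra)); [| exact Vb].
  apply (continuous_induction U a b Hab Ua).
  - intros x Hx Ux. destruct (HU x ltac:(lra) Ux) as [e [He HUe]].
    exists e. split; [exact He |]. intros y Hy Hyb. apply HUe; [lra | rewrite Rabs_right; lra].
  - intros x Hx Hleft. destruct (HUV x ltac:(lra)) as [Ux | Vx]; [exact Ux | exfalso].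
    destruct (HV x ltac:(lra) Vx) as [e [He HVe]].
    set (y := Rmax a (x - e / 2)).
    assert (Hy : a <= y < x /\ Rabs (y - x) < e)
      by (unfold y, Rmax; destruct (Rle_dec a (x - e / 2)); rewrite Rabs_left; lra).
    apply (Hdisj y ltac:(lra)); [apply Hleft; lra | apply HVe; [lra | apply Hy]].
Qed.

Lemma le_0_of_exp_decay (k B t X : R) : 0 < k -> 0 <= B ->
  (forall s, s <= t -> X <= exp (- k * (t - s)) * B) -> X <= 0.
Proof.
  intros Hk HB Hdecay. destruct (Rle_or_lt X 0) as [| HX]; [assumption | exfalso].
  set (u := B / (k * X)).
  assert (Hu : 0 <= u) by (apply Rmult_le_pos; [lra | left; apply Rinv_0_lt_compat; nra]).
  specialize (Hdecay (t - u) ltac:(lra)). replace (- k * (t - (t - u))) with (- (k * u)) in Hdecay by ring.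
  rewrite exp_Ropp in Hdecay. pose proof (exp_pos (k * u)). pose proof (exp_ineq1_le (k * u)).
  apply (Rmult_le_compat_l (exp (k * u))) in Hdecay; [| lra].
  rewrite <- Rmult_assoc, Rinv_r, Rmult_1_l in Hdecay by lra.
  assert (k * u * X = B) by (unfold u; field; lra).
  nra.
Qed.

Lemma Rabs_le_sqrt (x c : R) : x * x <= c -> Rabs x <= sqrt c.
Proof.
  intros Hx. assert (Hc : 0 <= c) by nra.
  rewrite <- (Rabs_right (sqrt c)) by (apply Rle_ge, sqrt_pos).
  apply Rsqr_le_abs_0. rewrite Rsqr_sqrt by exact Hc. exact Hx.
Qed.

Lemma sqrt_exp (x : R) : sqrt (exp x) = exp (x / 2).
Proof.
  apply sqrt_lem_1; [left; apply exp_pos | left; apply exp_pos |].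
  rewrite <- exp_plus. f_equal. field.
Qed.

Definition one_pos : posreal := mkposreal 1 Rlt_0_1.

Definition pointwise_lim (u : nat -> R -> R) (t : R) : R := real (Lim_seq (fun n => u n t)).

Lemma Rabs_sub_lim_le (u : nat -> R) (l a B : R) (N : nat) : is_lim_seq u l ->
  (forall n, (N <= n)%nat -> Rabs (u n - a) <= B) -> Rabs (l - a) <= B.
Proof.
  intros Hu Hb.
  assert (Hlim : is_lim_seq (fun n => Rabs (u n - a)) (Rabs (l - a))).
  { apply (is_lim_seq_abs _ (l - a)), (is_lim_seq_minus _ _ l a);
      [exact Hu | apply is_lim_seq_const | reflexivity]. }
  assert (Hb' : eventually (fun n => Rabs (u n - a) <= B)) by (exists N; exact Hb).
  apply (is_lim_seq_le_loc _ (fun _ => B) (Rabs (l - a)) B Hb' Hlim (is_lim_seq_const B)).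
Qed.

Lemma CVU_pointwise_lim (u : nat -> R -> R) (b : nat -> R) (c : R) (N : nat) :
  is_lim_seq b 0 ->
  (forall m n s, (N <= m <= n)%nat -> Boule c one_pos s -> Rabs (u n s - u m s) <= b m) ->
  CVU u (pointwise_lim u) c one_pos.
Proof.
  intros Hb Hcauchy.
  assert (Hsmall : forall eps, 0 < eps -> exists N', (N <= N')%nat /\ forall m, (N' <= m)%nat -> b m < eps).
  { intros eps Heps. apply is_lim_seq_spec in Hb. destruct (Hb (mkposreal eps Heps)) as [N' HN'].
    exists (max N N'). split; [lia |]. intros m Hm. specialize (HN' m ltac:(lia)).
    apply Rabs_lt_between in HN'. simpl in HN'. lra. }
  assert (Hlim : forall s, Boule c one_pos s -> is_lim_seq (fun n => u n s) (pointwise_lim u s)).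
  { intros s Hs. apply Lim_seq_correct', ex_lim_seq_cauchy_corr. intros [eps Heps].
    destruct (Hsmall eps Heps) as [N' [HNN' HN']]. exists N'. intros n m Hn Hm. simpl.
    destruct (le_lt_dec m n).
    - eapply Rle_lt_trans; [apply Hcauchy; [lia | exact Hs] | apply HN'; lia].
    - rewrite Rabs_minus_sym.
      eapply Rle_lt_trans; [apply Hcauchy; [lia | exact Hs] | apply HN'; lia]. }
  intros eps Heps. destruct (Hsmall eps Heps) as [N' [HNN' HN']]. exists N'.
  intros m s Hm Hs. eapply Rle_lt_trans; [| apply (HN' m Hm)].
  apply (Rabs_sub_lim_le (fun n => u n s) _ _ _ m (Hlim s Hs)).
  intros n Hn. apply Hcauchy; [lia | exact Hs].
Qed.

Lemma CVU_shift (u : nat -> R -> R) (y : R -> R) (c : R) (r : posreal) :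
  CVU u y c r -> CVU (fun n => u (S n)) y c r.
Proof.
  intros Hu eps Heps. destruct (Hu eps Heps) as [N HN]. exists N.
  intros n s Hn Hs. apply HN; [lia | exact Hs].
Qed.

Lemma is_derive_CVU_lim (f : R -> R -> R) (L : R) (u v : nat -> R -> R) (y : R -> R) :
  (forall t p q, Rabs (f t p - f t q) <= L * Rabs (p - q)) ->
  (forall n t, is_derive (u n) t (f t (v n t))) ->
  (forall t, CVU u y t one_pos) -> (forall t, CVU v y t one_pos) ->
  forall t, is_derive y t (f t (y t)).
Proof.
  intros Hlip Hu Hcu Hcv t. apply is_derive_Reals.
  apply (CVU_derivable u (fun n s => f s (v n s)) y (fun s => f s (y s)) t one_pos).
  - intros eps Heps.
    destruct (Hcv t (eps / (Rabs L + 1))) as [N HN];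
      [apply Rdiv_lt_0_compat; [exact Heps | pose proof (Rabs_pos L); lra] |].
    exists N. intros n s Hn Hs. specialize (HN n s Hn Hs).
    eapply Rle_lt_trans; [apply Hlip |].
    apply (Rle_lt_trans _ (Rabs L * Rabs (y s - v n s)));
      [apply Rmult_le_compat_r; [apply Rabs_pos | apply Rle_abs] |].
    apply (Rmult_lt_compat_l (Rabs L + 1)) in HN; [| pose proof (Rabs_pos L); lra].
    replace ((Rabs L + 1) * (eps / (Rabs L + 1))) with eps in HN by (field; pose proof (Rabs_pos L); lra).
    pose proof (Rabs_pos (y s - v n s)). nra.
  - intros s Hs eps Heps. destruct (Hcu t eps Heps) as [N HN]. exists N. intros n Hn.
    unfold Rdist. rewrite Rabs_minus_sym. apply HN; [lia | exact Hs].
  - intros n s _. apply is_derive_Reals, Hu.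
  - unfold Boule. rewrite Rminus_eq_0, Rabs_R0. simpl. lra.
Qed.

Lemma Rabs_sub_le_geometric (u : nat -> R) (c : R) :
  (forall k, Rabs (u (S k) - u k) <= c * (/ 2) ^ k) ->
  forall m n, (m <= n)%nat -> Rabs (u n - u m) <= 2 * c * (/ 2) ^ m.
Proof.
  intros Hstep m n Hmn. replace n with (m + (n - m))%nat by lia.
  assert (Htele : forall p, Rabs (u (m + p)%nat - u m) <= 2 * c * ((/ 2) ^ m - (/ 2) ^ (m + p))).
  { induction p as [| p IH].
    - rewrite Nat.add_0_r, Rminus_eq_0, Rabs_R0. lra.
    - replace (m + S p)%nat with (S (m + p)) by lia.
      replace (u (S (m + p)) - u m) with ((u (S (m + p)) - u (m + p)%nat) + (u (m + p)%nat - u m)) by ring.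
      eapply Rle_trans; [apply Rabs_triang |].
      pose proof (Hstep (m + p)%nat). simpl pow. lra. }
  eapply Rle_trans; [apply Htele |].
  assert (0 <= c).
  { specialize (Hstep 0%nat). simpl pow in Hstep. pose proof (Rabs_pos (u 1%nat - u 0%nat)). lra. }
  pose proof (pow_le (/ 2) (m + (n - m)) ltac:(lra)). nra.
Qed.

Lemma Rabs_le_of_derive_exp_bound (g dg : R -> R) (L C t0 : R) : 0 < L -> 0 <= C ->
  (forall t, is_derive g t (dg t)) -> g t0 = 0 ->
  (forall s, Rabs (dg s) <= L * C * exp (2 * L * Rabs (s - t0))) ->
  forall t, Rabs (g t) <= C / 2 * exp (2 * L * Rabs (t - t0)).
Proof.
  intros HL HC Hg Hg0 Hdg t.
  assert (HC2 : 0 <= C / 2) by lra.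
  destruct (Rle_or_lt t0 t) as [Ht | Ht].
  - pose proof (Rabs_sub_le_of_derive_dominated g dg (fun s => C / 2 * exp (2 * L * (s - t0)))
      (fun s => L * C * exp (2 * L * (s - t0))) t0 t Hg) as Hdom.
    rewrite Hg0, Rminus_0_r, Rminus_eq_0, Rmult_0_r, exp_0 in Hdom.
    rewrite (Rabs_right (t - t0)) by lra.
    enough (Rabs (g t) <= C / 2 * exp (2 * L * (t - t0)) - C / 2 * 1) by lra.
    apply Hdom; [| exact Ht |].
    + intros s. auto_derive; [exact I | unfold Rminus; field].
    + intros s Hs. rewrite <- (Rabs_right (s - t0)) by lra. apply Hdg.
  - pose proof (Rabs_sub_le_of_derive_dominated g dg (fun s => - (C / 2 * exp (2 * L * (t0 - s))))
      (fun s => L * C * exp (2 * L * (t0 - s))) t t0 Hg) as Hdom.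
    rewrite Hg0, Rminus_0_l, Rabs_Ropp, Rminus_eq_0, Rmult_0_r, exp_0 in Hdom.
    rewrite (Rabs_left (t - t0)) by lra. replace (- (t - t0)) with (t0 - t) by ring.
    enough (Rabs (g t) <= - (C / 2 * 1) - - (C / 2 * exp (2 * L * (t0 - t)))) by lra.
    apply Hdom; [| lra |].
    + intros s. auto_derive; [exact I | unfold Rminus; field].
    + intros s Hs. replace (t0 - s) with (Rabs (s - t0)) by (rewrite Rabs_left1; lra). apply Hdg.
Qed.

Lemma is_lim_seq_of_CVU (u : nat -> R -> R) (y : R -> R) (c : R) (r : posreal) :
  CVU u y c r -> is_lim_seq (fun n => u n c) (y c).
Proof.
  intros Hu. apply is_lim_seq_spec. intros eps.
  destruct (Hu eps (cond_pos eps)) as [N HN]. exists N. intros n Hn.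
  rewrite Rabs_minus_sym. apply HN; [lia |]. unfold Boule. rewrite Rminus_eq_0, Rabs_R0. apply cond_pos.
Qed.

Lemma is_lim_m_infty_eps (f : R -> R) (l : R) : is_lim f m_infty l ->
  forall eps, 0 < eps -> exists M, forall x, x < M -> Rabs (f x - l) < eps.
Proof. intros Hf eps Heps. apply is_lim_spec in Hf. exact (Hf (mkposreal eps Heps)). Qed.

Lemma is_lim_p_infty_eps (f : R -> R) (l : R) : is_lim f p_infty l ->
  forall eps, 0 < eps -> exists M, forall x, M < x -> Rabs (f x - l) < eps.
Proof. intros Hf eps Heps. apply is_lim_spec in Hf. exact (Hf (mkposreal eps Heps)). Qed.

Lemma is_lim_m_infty_of_eps (f : R -> R) (l : R) :
  (forall eps, 0 < eps -> exists M, forall x, x < M -> Rabs (f x - l) < eps) -> is_lim f m_infty l.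
Proof. intros Hf. apply is_lim_spec. intros eps. apply (Hf eps (cond_pos eps)). Qed.

Lemma is_lim_p_infty_of_eps (f : R -> R) (l : R) :
  (forall eps, 0 < eps -> exists M, forall x, M < x -> Rabs (f x - l) < eps) -> is_lim f p_infty l.
Proof. intros Hf. apply is_lim_spec. intros eps. apply (Hf eps (cond_pos eps)). Qed.

(** * Global existence by Picard iteration *)

Fixpoint picard_iterate (f : R -> R -> R) (t0 y0 : R) (k : nat) : R -> R :=
  match k with
  | O => fun _ => y0
  | S k => fun t => y0 + RInt (fun s => f s (picard_iterate f t0 y0 k s)) t0 t
  end.

Definition picard_solution (f : R -> R -> R) (t0 y0 : R) : R -> R :=
  pointwise_lim (picard_iterate f t0 y0).

Section Picard.

Variables (f : R -> R -> R) (L M t0 y0 : R).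
Hypothesis L_pos : 0 < L.
Hypothesis f_lipschitz : forall t p q, Rabs (f t p - f t q) <= L * Rabs (p - q).
Hypothesis f_bounded : forall t p, Rabs (f t p) <= M.
Hypothesis f_continuous : forall phi : R -> R, (forall t, continuous phi t) ->
  forall t, continuous (fun s => f s (phi s)) t.

Notation it := (picard_iterate f t0 y0).

Lemma is_derive_integral_curve (phi : R -> R) : (forall t, continuous phi t) ->
  forall t, is_derive (fun t => y0 + RInt (fun s => f s (phi s)) t0 t) t (f t (phi t)).
Proof.
  intros Hphi t. replace (f t (phi t)) with (0 + f t (phi t)) by ring.
  apply (is_derive_plus (fun _ => y0)); [apply is_derive_Reals, derivable_pt_lim_const |].
  apply (is_derive_RInt (fun s => f s (phi s)) _ t0); [| now apply f_continuous].
  apply filter_forall. intros b. apply (RInt_correct (V := R_CompleteNormedModule)).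
  apply (ex_RInt_continuous (V := R_CompleteNormedModule)). intros z _. now apply f_continuous.
Qed.

Lemma picard_iterate_continuous k t : continuous (it k) t.
Proof.
  revert t. induction k as [| k IH]; intros t; [apply continuous_const |].
  apply (ex_derive_continuous (K := R_AbsRing) (V := R_NormedModule)).
  eexists. exact (is_derive_integral_curve (it k) IH t).
Qed.

Lemma picard_iterate_derive k t : is_derive (it (S k)) t (f t (it k t)).
Proof. apply is_derive_integral_curve, picard_iterate_continuous. Qed.

Lemma picard_iterate_t0 k : it k t0 = y0.
Proof. destruct k; simpl; [reflexivity |]. rewrite RInt_point. apply Rplus_0_r. Qed.

Lemma picard_bound_nonneg : 0 <= M.
Proof. pose proof (f_bounded 0 0). pose proof (Rabs_pos (f 0 0)). lra. Qed.

Lemma picard_iterate_step k t :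
  Rabs (it (S k) t - it k t) <= M / L * (/ 2) ^ k * exp (2 * L * Rabs (t - t0)).
Proof.
  pose proof picard_bound_nonneg as HM.
  assert (HML : 0 <= M / L) by (apply Rmult_le_pos; [lra | left; now apply Rinv_0_lt_compat]).
  revert t. induction k as [| k IH]; intros t.
  - replace (M / L * (/ 2) ^ 0) with (2 * (M / L) / 2) by (simpl; field; lra).
    apply (Rabs_le_of_derive_exp_bound (fun t => it 1 t - it 0 t) (fun s => f s y0 - 0)); [lra | lra | | |].
    + intros s. apply (is_derive_minus (it 1) (it 0));
        [apply picard_iterate_derive | apply is_derive_Reals, derivable_pt_lim_const].
    + rewrite !picard_iterate_t0. ring.
    + intros s. rewrite Rminus_0_r. replace (L * (2 * (M / L))) with (2 * M) by (field; lra).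
      pose proof (exp_ineq1_le (2 * L * Rabs (s - t0))).
      assert (0 <= 2 * L * Rabs (s - t0)) by (pose proof (Rabs_pos (s - t0)); nra).
      pose proof (f_bounded s y0). nra.
  - replace (M / L * (/ 2) ^ S k) with (M / L * (/ 2) ^ k / 2) by (simpl; field; lra).
    apply (Rabs_le_of_derive_exp_bound (fun t => it (S (S k)) t - it (S k) t)
      (fun s => f s (it (S k) s) - f s (it k s))); [lra | pose proof (pow_le (/ 2) k); nra | | |].
    + intros s. apply (is_derive_minus (it (S (S k))) (it (S k))); apply picard_iterate_derive.
    + rewrite !picard_iterate_t0. ring.
    + intros s. eapply Rle_trans; [apply f_lipschitz |].
      rewrite Rmult_assoc. apply Rmult_le_compat_l; [lra | apply IH].
Qed.

Lemma picard_iterate_CVU c : CVU it (picard_solution f t0 y0) c one_pos.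
Proof.
  set (B := M / L * exp (2 * L * (Rabs (c - t0) + 1))).
  apply (CVU_pointwise_lim it (fun m => 2 * B * (/ 2) ^ m) c 0).
  - replace 0 with (2 * B * 0) by ring. apply (is_lim_seq_scal_l _ _ 0), is_lim_seq_geom.
    rewrite Rabs_right; lra.
  - intros m n s Hmn Hs.
    eapply Rle_trans.
    { apply (Rabs_sub_le_geometric (fun k => it k s) (M / L * exp (2 * L * Rabs (s - t0)))); [| lia].
      intros k. eapply Rle_trans; [apply picard_iterate_step | right; ring]. }
    assert (Hexp : exp (2 * L * Rabs (s - t0)) <= exp (2 * L * (Rabs (c - t0) + 1))).
    { apply exp_le_mono, Rmult_le_compat_l; [lra |].
      replace (s - t0) with ((s - c) + (c - t0)) by ring.
      unfold Boule in Hs. simpl in Hs. pose proof (Rabs_triang (s - c) (c - t0)). lra. }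
    assert (HML : 0 <= M / L)
      by (pose proof picard_bound_nonneg; apply Rmult_le_pos; [lra | left; now apply Rinv_0_lt_compat]).
    apply Rmult_le_compat_r; [apply pow_le; lra |].
    apply Rmult_le_compat_l; [lra |]. now apply Rmult_le_compat_l.
Qed.

Lemma picard_solution_t0 : picard_solution f t0 y0 t0 = y0.
Proof.
  unfold picard_solution, pointwise_lim.
  rewrite (Lim_seq_ext _ (fun _ => y0)) by apply picard_iterate_t0.
  now rewrite Lim_seq_const.
Qed.

Lemma picard_solution_derive t :
  is_derive (picard_solution f t0 y0) t (f t (picard_solution f t0 y0 t)).
Proof.
  apply (is_derive_CVU_lim f L (fun n => it (S n)) it); [exact f_lipschitz | apply picard_iterate_derive | |];
    intros c; [apply CVU_shift |]; apply picard_iterate_CVU.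
Qed.

End Picard.

Lemma Rabs_mult_le_l (u v : R) : Rabs v <= 1 -> Rabs (u * v) <= Rabs u.
Proof.
  intros Hv. rewrite Rabs_mult. pose proof (Rabs_pos u). pose proof (Rabs_pos v). nra.
Qed.

Lemma cos_bounds_half_pi (x : R) : - (PI / 2) <= x <= PI / 2 -> 0 <= cos x <= 1.
Proof. intros Hx. split; [apply cos_ge_0; lra | apply COS_bound]. Qed.

Lemma one_sub_cos_le_Rabs_sin (x : R) : - (PI / 2) <= x <= PI / 2 -> 1 - cos x <= Rabs (sin x).
Proof.
  intros Hx. pose proof (cos_bounds_half_pi x Hx). pose proof (sin2_cos2 x) as Hsc.
  unfold Rsqr in Hsc.
  assert (Hsin1 : Rabs (sin x) <= 1) by (apply Rabs_le, SIN_bound).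
  assert (Hsq : Rabs (sin x) * Rabs (sin x) = sin x * sin x)
    by (rewrite <- Rabs_mult; apply Rabs_right; nra).
  pose proof (Rabs_pos (sin x)). nra.
Qed.

Lemma sin_margin_le (eta x : R) : 0 <= eta <= PI / 2 -> eta <= x <= PI - eta -> sin eta <= sin x.
Proof.
  intros Heta Hx. destruct (Rle_or_lt x (PI / 2)).
  - apply sin_incr_1; lra.
  - rewrite <- (sin_PI_x x). apply sin_incr_1; lra.
Qed.

Lemma cos_neg_PI_add (u : R) : cos (- PI + u) = - cos u.
Proof. replace (- PI + u) with (- (PI - u)) by ring. rewrite cos_neg. apply Rtrigo_facts.cos_pi_minus. Qed.

Lemma cos_atan_le (eps t : R) : 0 < eps -> / eps <= Rabs t -> cos (atan t) <= eps.
Proof.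
  intros Heps Ht. rewrite cos_atan.
  assert (Hsqrt : Rabs t <= sqrt (1 + t²)).
  { rewrite <- sqrt_Rsqr_abs. apply sqrt_le_1_alt. pose proof (Rle_0_sqr t). lra. }
  assert (Hpos : 0 < / eps) by now apply Rinv_0_lt_compat.
  unfold Rdiv. rewrite Rmult_1_l, <- (Rinv_inv eps).
  apply Rinv_le_contravar; lra.
Qed.

Lemma acos_le_acos (E E' : R) : -1 <= E <= 1 -> -1 <= E' <= 1 -> E <= E' -> acos E' <= acos E.
Proof.
  intros HE HE' Hle. destruct (Rle_or_lt (acos E') (acos E)) as [| Hlt]; [assumption | exfalso].
  pose proof (acos_bound E). pose proof (acos_bound E').
  pose proof (cos_decreasing_1 (acos E) (acos E') ltac:(lra) ltac:(lra) ltac:(lra) ltac:(lra) Hlt) as Hcos.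
  rewrite !cos_acos in Hcos by assumption. lra.
Qed.

Lemma atan_bounds_le (t : R) : - (PI / 2) <= atan t <= PI / 2.
Proof. pose proof (atan_bound t). lra. Qed.

Lemma atan_nonneg (t : R) : 0 <= t -> 0 <= atan t.
Proof. intros [Ht | <-]; [left; rewrite <- atan_0; now apply atan_increasing | rewrite atan_0; lra]. Qed.

Lemma atan_nonpos (t : R) : t <= 0 -> atan t <= 0.
Proof. intros [Ht | ->]; [left; rewrite <- atan_0; now apply atan_increasing | rewrite atan_0; lra]. Qed.

Lemma atan_is_xi_orbit (t : R) : is_derive atan t (xi_field (atan t)).
Proof.
  apply is_derive_Reals. unfold xi_field.
  replace (cos (atan t) ^ 2) with (/ (1 + t ^ 2)); [apply derivable_pt_lim_atan |].
  rewrite cos_atan. assert (Hpos : 0 < 1 + t²) by (pose proof (Rle_0_sqr t); lra).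
  pose proof (sqrt_lt_R0 _ Hpos). pose proof (sqrt_sqrt (1 + t²) ltac:(lra)) as Hsq.
  set (s := sqrt (1 + t²)) in *.
  replace (1 + t ^ 2) with (s * s) by (rewrite Hsq; unfold Rsqr; ring). field. lra.
Qed.

Lemma is_lim_atan_p_infty : is_lim atan p_infty (PI / 2).
Proof.
  apply is_lim_p_infty_of_eps. intros eps Heps. pose proof PI_RGT_0.
  set (e := Rmin (eps / 2) (PI / 4)).
  assert (He : 0 < e <= eps / 2 /\ e <= PI / 4)
    by (split; [split; [apply Rmin_glb_lt; lra | apply Rmin_l] | apply Rmin_r]).
  exists (tan (PI / 2 - e)). intros x Hx.
  apply atan_increasing in Hx. rewrite atan_tan in Hx by lra.
  pose proof (atan_bound x). rewrite Rabs_left; lra.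
Qed.

Lemma is_lim_atan_m_infty : is_lim atan m_infty (- PI / 2).
Proof.
  apply is_lim_m_infty_of_eps. intros eps Heps. pose proof PI_RGT_0.
  set (e := Rmin (eps / 2) (PI / 4)).
  assert (He : 0 < e <= eps / 2 /\ e <= PI / 4)
    by (split; [split; [apply Rmin_glb_lt; lra | apply Rmin_l] | apply Rmin_r]).
  exists (tan (- PI / 2 + e)). intros x Hx.
  apply atan_increasing in Hx. rewrite atan_tan in Hx by lra.
  pose proof (atan_bound x). rewrite Rabs_right; lra.
Qed.

Lemma xi_orbit_eq_atan (x : R -> R) :
  (forall t, - PI / 2 < x t < PI / 2 /\ is_derive x t (xi_field (x t))) ->
  forall t, x t = atan (t + tan (x 0)).
Proof.
  intros Hx.
  set (g t := tan (x t) - t).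
  assert (Hg : forall t, is_derive g t 0).
  { intros t. destruct (Hx t) as [Hb Hd]. assert (Hc : 0 < cos (x t)) by (apply cos_gt_0; lra).
    replace 0 with ((tan (x t) ^ 2 + 1) * xi_field (x t) - 1).
    - apply (is_derive_minus (fun t => tan (x t)) (fun t => t));
        [| apply is_derive_Reals, derivable_pt_lim_id].
      replace ((tan (x t) ^ 2 + 1) * xi_field (x t)) with (xi_field (x t) * (tan (x t) ^ 2 + 1)) by ring.
      apply (is_derive_comp tan x t); [apply is_derive_tan; lra | exact Hd].
    - unfold xi_field, tan. pose proof (sin2_cos2 (x t)) as Hsc. unfold Rsqr in Hsc.
      field_simplify; [| lra]. simpl. lra. }
  assert (Hconst : forall p q, p <= q -> g p = g q).
  { intros p q Hpq.
    pose proof (le_of_derive_nonneg g (fun _ => 0) p q Hg Hpq ltac:(intros; lra)).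
    pose proof (le_of_derive_nonneg (fun t => - g t) (fun _ => - 0) p q
                  ltac:(intros t; now apply (is_derive_opp g)) Hpq ltac:(intros; lra)).
    lra. }
  intros t. assert (Hgt : g t = g 0) by (destruct (Rle_or_lt t 0); [| symmetry]; apply Hconst; lra).
  unfold g in Hgt. replace (t + tan (x 0)) with (tan (x t)) by lra.
  rewrite atan_tan; [reflexivity | destruct (Hx t); lra].
Qed.

Lemma is_lim_shift (w : R -> R) (x : Rbar) (l c : R) : (x = m_infty \/ x = p_infty) ->
  is_lim w x l -> is_lim (fun u => w (u - c)) x l.
Proof.
  intros [-> | ->] Hw.
  - apply is_lim_m_infty_of_eps. intros eps Heps. destruct (is_lim_m_infty_eps w l Hw eps Heps) as [M HM].
    exists (M + c). intros u Hu. apply HM. lra.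
  - apply is_lim_p_infty_of_eps. intros eps Heps. destruct (is_lim_p_infty_eps w l Hw eps Heps) as [M HM].
    exists (M + c). intros u Hu. apply HM. lra.
Qed.

(** * The Omega-equation *)

Section OmegaFlow.

Variables a gam lam : R.
Hypothesis a_pos : 0 < a.

Definition Om_lip : R := 2 * a + 2 * Rabs lam.
Definition Om_dev : R := 2 * a + 2 * Rabs lam + 2 * Rabs gam + 1.

Lemma Om_lip_pos : 0 < Om_lip.
Proof. unfold Om_lip. pose proof (Rabs_pos lam). lra. Qed.

(* At [xi = s PI/2] ([s = 1] or [-1]) the field reduces to [2 a s cos y - 2 a E]. *)
Lemma Om_field_sub_le (E xi y s : R) : - (PI / 2) <= xi <= PI / 2 ->
  Rabs (Om_field a gam lam E xi y - (2 * a * s * cos y - 2 * a * E))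
    <= 2 * a * Rabs (sin xi - s) + (2 * Rabs lam + 2 * Rabs gam + 1) * cos xi.
Proof.
  intros Hxi. pose proof (cos_bounds_half_pi xi Hxi) as Hc.
  assert (Hcos : Rabs (cos y) <= 1) by (apply Rabs_le, COS_bound).
  assert (Hsin : Rabs (sin y) <= 1) by (apply Rabs_le, SIN_bound).
  assert (Hsinxi : Rabs (sin xi) <= 1) by (apply Rabs_le, SIN_bound).
  assert (H1 : Rabs (2 * a * (sin xi - s) * cos y) <= 2 * a * Rabs (sin xi - s)).
  { eapply Rle_trans; [now apply Rabs_mult_le_l |].
    rewrite !Rabs_mult, (Rabs_right 2), (Rabs_right a) by lra. lra. }
  assert (H2 : Rabs (2 * lam * cos xi * sin y) <= 2 * Rabs lam * cos xi).
  { eapply Rle_trans; [now apply Rabs_mult_le_l |].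
    rewrite !Rabs_mult, (Rabs_right 2), (Rabs_right (cos xi)) by lra. lra. }
  assert (H3 : Rabs (2 * gam * cos xi * sin xi) <= 2 * Rabs gam * cos xi).
  { eapply Rle_trans; [now apply Rabs_mult_le_l |].
    rewrite !Rabs_mult, (Rabs_right 2), (Rabs_right (cos xi)) by lra. lra. }
  assert (H4 : Rabs (cos xi * cos xi) <= cos xi) by (rewrite Rabs_right; nra).
  unfold Om_field.
  replace (2 * a * sin xi * cos y + 2 * lam * cos xi * sin y + 2 * gam * sin xi * cos xi
           + cos xi ^ 2 - 2 * a * E - (2 * a * s * cos y - 2 * a * E))
    with (2 * a * (sin xi - s) * cos y + 2 * lam * cos xi * sin y + 2 * gam * cos xi * sin xi
          + cos xi * cos xi) by ring.
  pose proof (Rabs_triang (2 * a * (sin xi - s) * cos y + 2 * lam * cos xi * sin y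
                           + 2 * gam * cos xi * sin xi) (cos xi * cos xi)).
  pose proof (Rabs_triang (2 * a * (sin xi - s) * cos y + 2 * lam * cos xi * sin y)
                          (2 * gam * cos xi * sin xi)).
  pose proof (Rabs_triang (2 * a * (sin xi - s) * cos y) (2 * lam * cos xi * sin y)).
  lra.
Qed.

Lemma Om_field_near_top (E xi y : R) : 0 <= xi <= PI / 2 ->
  Rabs (Om_field a gam lam E xi y - (2 * a * cos y - 2 * a * E)) <= Om_dev * cos xi.
Proof.
  intros Hxi. replace (2 * a * cos y) with (2 * a * 1 * cos y) by ring.
  eapply Rle_trans; [apply Om_field_sub_le; lra |].
  pose proof (one_sub_cos_le_Rabs_sin xi ltac:(lra)).
  rewrite (Rabs_right (sin xi)) in H by (apply Rle_ge, sin_ge_0; lra).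
  rewrite Rabs_left1 by (pose proof (SIN_bound xi); lra).
  unfold Om_dev. nra.
Qed.

Lemma Om_field_near_bottom (E xi y : R) : - (PI / 2) <= xi <= 0 ->
  Rabs (Om_field a gam lam E xi y - (- 2 * a * cos y - 2 * a * E)) <= Om_dev * cos xi.
Proof.
  intros Hxi. replace (- 2 * a * cos y) with (2 * a * (- 1) * cos y) by ring.
  eapply Rle_trans; [apply Om_field_sub_le; lra |].
  pose proof (one_sub_cos_le_Rabs_sin xi ltac:(lra)).
  rewrite (Rabs_left1 (sin xi)) in H by (rewrite <- (Ropp_involutive xi), sin_neg;
    pose proof (sin_ge_0 (- xi)); lra).
  rewrite Rabs_right by (pose proof (SIN_bound xi); lra).
  unfold Om_dev. nra.
Qed.

Lemma Om_field_bounded (E xi y : R) : - (PI / 2) <= xi <= PI / 2 ->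
  Rabs (Om_field a gam lam E xi y) <= Om_dev + 2 * a * Rabs E.
Proof.
  intros Hxi. pose proof (Om_field_sub_le E xi y 0 Hxi) as Hdev.
  rewrite Rminus_0_r in Hdev. replace (2 * a * 0 * cos y - 2 * a * E) with (- (2 * a * E)) in Hdev by ring.
  pose proof (cos_bounds_half_pi xi Hxi). assert (Rabs (sin xi) <= 1) by (apply Rabs_le, SIN_bound).
  pose proof (Rabs_triang (Om_field a gam lam E xi y - - (2 * a * E)) (- (2 * a * E))) as Htri.
  replace (Om_field a gam lam E xi y - - (2 * a * E) + - (2 * a * E))
    with (Om_field a gam lam E xi y) in Htri by ring.
  rewrite Rabs_Ropp, Rabs_mult, (Rabs_right (2 * a)) in Htri by lra.
  pose proof (Rabs_pos lam). pose proof (Rabs_pos gam). unfold Om_dev. nra.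
Qed.

Definition Om_field_dy (xi y : R) : R := - 2 * a * sin xi * sin y + 2 * lam * cos xi * cos y.

Lemma Om_field_derive_y (E xi y : R) :
  is_derive (fun y => Om_field a gam lam E xi y) y (Om_field_dy xi y).
Proof. unfold Om_field, Om_field_dy. auto_derive; [exact I | ring]. Qed.

Lemma Om_field_dy_bound (xi y : R) : Rabs (Om_field_dy xi y) <= Om_lip.
Proof.
  unfold Om_field_dy, Om_lip.
  assert (H1 : Rabs (- 2 * a * sin xi * sin y) <= 2 * a).
  { replace (- 2 * a * sin xi * sin y) with (- 2 * a * (sin xi * sin y)) by ring.
    rewrite Rabs_mult, Rabs_left by lra.
    assert (Rabs (sin xi * sin y) <= 1).
    { eapply Rle_trans; [apply Rabs_mult_le_l, Rabs_le, SIN_bound | apply Rabs_le, SIN_bound]. }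
    pose proof (Rabs_pos (sin xi * sin y)). nra. }
  assert (H2 : Rabs (2 * lam * cos xi * cos y) <= 2 * Rabs lam).
  { replace (2 * lam * cos xi * cos y) with (2 * lam * (cos xi * cos y)) by ring.
    eapply Rle_trans; [apply Rabs_mult_le_l |].
    - eapply Rle_trans; [apply Rabs_mult_le_l, Rabs_le, COS_bound | apply Rabs_le, COS_bound].
    - rewrite Rabs_mult, Rabs_right by lra. lra. }
  pose proof (Rabs_triang (- 2 * a * sin xi * sin y) (2 * lam * cos xi * cos y)). lra.
Qed.

Lemma Om_field_lipschitz (E xi p q : R) :
  Rabs (Om_field a gam lam E xi p - Om_field a gam lam E xi q) <= Om_lip * Rabs (p - q).
Proof.
  destruct (MVT_abs (fun y => Om_field a gam lam E xi y) (Om_field_dy xi) q p) as [c [Hc _]].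
  - intros c _. apply is_derive_Reals, Om_field_derive_y.
  - rewrite Hc. apply Rmult_le_compat_r; [apply Rabs_pos | apply Om_field_dy_bound].
Qed.

Lemma Om_field_sub_energy (E E' xi y : R) :
  Om_field a gam lam E xi y - Om_field a gam lam E' xi y = 2 * a * (E' - E).
Proof. unfold Om_field. ring. Qed.

Lemma Om_field_dy_contract (eta xi c : R) : 0 <= eta <= PI / 2 -> - (PI / 2) <= xi <= 0 ->
  - PI + eta <= c <= - eta -> Om_field_dy xi c <= - 2 * a * sin eta + Om_lip * cos xi.
Proof.
  intros Heta Hxi Hc. unfold Om_field_dy, Om_lip.
  pose proof (cos_bounds_half_pi xi ltac:(lra)).
  pose proof (one_sub_cos_le_Rabs_sin xi ltac:(lra)) as Hs.
  rewrite Rabs_left1 in Hs by (rewrite <- (Ropp_involutive xi), sin_neg;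
    pose proof (sin_ge_0 (- xi)); lra).
  assert (Hsc : sin eta <= - sin c) by (rewrite <- sin_neg; apply sin_margin_le; lra).
  assert (Hseta : 0 <= sin eta <= 1) by (split; [apply sin_ge_0; lra | apply SIN_bound]).
  assert (H1 : - 2 * a * sin xi * sin c <= - 2 * a * (1 - cos xi) * sin eta).
  { assert ((1 - cos xi) * sin eta <= (- sin xi) * (- sin c)) by (apply Rmult_le_compat; lra). nra. }
  assert (H2 : 2 * lam * cos xi * cos c <= 2 * Rabs lam * cos xi).
  { assert (Habs : Rabs (2 * lam * cos xi * cos c) <= 2 * Rabs lam * cos xi).
    { eapply Rle_trans; [apply Rabs_mult_le_l, Rabs_le, COS_bound |].
      rewrite !Rabs_mult, (Rabs_right 2), (Rabs_right (cos xi)) by lra. lra. }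
    apply Rabs_le_between in Habs. lra. }
  assert (a * cos xi * sin eta <= a * cos xi * 1) by (apply Rmult_le_compat_l; nra).
  lra.
Qed.

Lemma Om_field_contract (E eta xi p q : R) : 0 <= eta <= PI / 2 -> - (PI / 2) <= xi <= 0 ->
  - PI + eta <= p <= - eta -> - PI + eta <= q <= - eta ->
  (Om_field a gam lam E xi p - Om_field a gam lam E xi q) * (p - q)
    <= (- 2 * a * sin eta + Om_lip * cos xi) * ((p - q) * (p - q)).
Proof.
  intros Heta Hxi Hp Hq.
  destruct (MVT_gen (fun y => Om_field a gam lam E xi y) q p (Om_field_dy xi)) as [c [Hc ->]].
  - intros c _. apply Om_field_derive_y.
  - intros c _. apply (continuity_pt_of_is_derive _ c _ (Om_field_derive_y E xi c)).
  - assert (Hcw : - PI + eta <= c <= - eta)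
      by (unfold Rmin, Rmax in Hc; destruct (Rle_dec q p); lra).
    pose proof (Om_field_dy_contract eta xi c Heta Hxi Hcw).
    pose proof (Rle_0_sqr (p - q)) as Hsq. unfold Rsqr in Hsq. nra.
Qed.

Lemma Om_field_continuous (E : R) (xi phi : R -> R) (t : R) :
  continuous xi t -> continuous phi t -> continuous (fun s => Om_field a gam lam E (xi s) (phi s)) t.
Proof.
  intros Hxi Hphi. unfold Om_field.
  assert (Hsin : forall g : R -> R, continuous g t -> continuous (fun s => sin (g s)) t).
  { intros g Hg. apply (continuous_comp g sin); [exact Hg |]. apply continuity_pt_filterlim, continuity_sin. }
  assert (Hcos : forall g : R -> R, continuous g t -> continuous (fun s => cos (g s)) t).
  { intros g Hg. apply (continuous_comp g cos); [exact Hg |]. apply continuity_pt_filterlim, continuity_cos. }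
  repeat match goal with
  | |- continuous (fun s => @?f s - @?g s) _ => apply (continuous_minus (V := R_NormedModule) f g)
  | |- continuous (fun s => @?f s + @?g s) _ => apply (continuous_plus (V := R_NormedModule) f g)
  | |- continuous (fun s => @?f s * @?g s) _ => apply (continuous_mult (K := R_AbsRing) f g)
  | |- continuous (fun s => @?f s ^ 2) _ => apply (continuous_mult (K := R_AbsRing) f (fun s => f s ^ 1))
  | |- continuous (fun s => @?f s ^ 1) _ => apply (continuous_mult (K := R_AbsRing) f (fun _ => 1))
  | |- continuous (fun s => sin (@?g s)) _ => apply (Hsin g)
  | |- continuous (fun s => cos (@?g s)) _ => apply (Hcos g)
  | |- continuous (fun s => _) _ => apply continuous_const
  end; assumption.
Qed.

(* Every orbit of the xi-equation in the open strip is [xi = atan (t + c)]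
   (xi_orbit_eq_atan), so the Omega-equation becomes a scalar ODE in [t]. *)
Definition om_rhs (E t y : R) : R := Om_field a gam lam E (atan t) y.

Definition om_solution (E : R) (y : R -> R) : Prop := forall t, is_derive y t (om_rhs E t (y t)).

Lemma om_solution_picard (E t0 y0 : R) :
  picard_solution (om_rhs E) t0 y0 t0 = y0 /\ om_solution E (picard_solution (om_rhs E) t0 y0).
Proof.
  assert (Hcont : forall phi : R -> R, (forall t, continuous phi t) ->
    forall t, continuous (fun s => om_rhs E s (phi s)) t).
  { intros phi Hphi t. apply Om_field_continuous; [| apply Hphi].
    apply continuity_pt_filterlim, derivable_continuous_pt, derivable_pt_atan. }
  assert (Hbound : forall t y, Rabs (om_rhs E t y) <= Om_dev + 2 * a * Rabs E)
    by (intros t y; apply Om_field_bounded, atan_bounds_le).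
  split.
  - apply (picard_solution_t0 (om_rhs E)).
  - intros t. apply (picard_solution_derive (om_rhs E) Om_lip (Om_dev + 2 * a * Rabs E));
      [apply Om_lip_pos | intros; apply Om_field_lipschitz | exact Hbound | exact Hcont].
Qed.

Lemma om_solution_of_orbit (E : R) (x w : R -> R) : is_orbit a gam lam E x w ->
  exists c, om_solution E (fun u => w (u - c)).
Proof.
  intros Horb. exists (tan (x 0)). intros u. change R in u.
  destruct (Horb (u - tan (x 0))) as [_ [_ Hw]].
  rewrite (xi_orbit_eq_atan x (fun t => conj (proj1 (Horb t)) (proj1 (proj2 (Horb t))))
            (u - tan (x 0))) in Hw.
  replace (u - tan (x 0) + tan (x 0)) with u in Hw by ring.
  replace (om_rhs E u (w (u - tan (x 0)))) with (1 * Om_field a gam lam E (atan u) (w (u - tan (x 0))))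
    by (unfold om_rhs; ring).
  apply (is_derive_comp w (fun u => u - tan (x 0)) u); [exact Hw |].
  replace 1 with (1 - 0) by ring.
  apply (is_derive_minus (fun u => u) (fun _ => tan (x 0)));
    [apply is_derive_Reals, derivable_pt_lim_id | apply is_derive_Reals, derivable_pt_lim_const].
Qed.

Lemma sqr_dist_derive (E E' : R) (y z : R -> R) (c t : R) : om_solution E y -> om_solution E' z ->
  is_derive (fun u => (y u - z u) * (y u - z u) + c) t
    (2 * (y t - z t) * (om_rhs E t (y t) - om_rhs E t (z t)) + 2 * (y t - z t) * (2 * a * (E' - E))).
Proof.
  intros Hy Hz.
  replace (2 * (y t - z t) * (om_rhs E t (y t) - om_rhs E t (z t)) + 2 * (y t - z t) * (2 * a * (E' - E)))
    with ((om_rhs E t (y t) - om_rhs E' t (z t)) * (y t - z t)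
          + (y t - z t) * (om_rhs E t (y t) - om_rhs E' t (z t)) + 0)
    by (unfold om_rhs; rewrite <- (Om_field_sub_energy E E' (atan t) (z t)); ring).
  apply (is_derive_plus (fun u => (y u - z u) * (y u - z u)) (fun _ => c));
    [| apply is_derive_Reals, derivable_pt_lim_const].
  apply (is_derive_mult (fun u => y u - z u) (fun u => y u - z u));
    [apply (is_derive_minus y z); auto .. | apply Rmult_comm].
Qed.

Lemma sqr_dist_growth (E E' : R) (y z : R -> R) (s t : R) :
  om_solution E y -> om_solution E' z -> s <= t ->
  (y t - z t) * (y t - z t) + 4 * a * a * ((E - E') * (E - E'))
    <= exp ((2 * Om_lip + 1) * (t - s)) * ((y s - z s) * (y s - z s) + 4 * a * a * ((E - E') * (E - E'))).
Proof.
  intros Hy Hz Hst.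
  apply (gronwall (fun u => (y u - z u) * (y u - z u) + 4 * a * a * ((E - E') * (E - E'))) _ _ s t
           (fun u => sqr_dist_derive E E' y z _ u Hy Hz) Hst).
  intros u _. pose proof Om_lip_pos.
  set (D := y u - z u). set (A := om_rhs E u (y u) - om_rhs E u (z u)).
  assert (HA : D * A <= Om_lip * (D * D)).
  { assert (Rabs A <= Om_lip * Rabs D) by apply Om_field_lipschitz.
    assert (Rabs D * Rabs D = D * D) by (rewrite <- Rabs_mult; apply Rabs_right; nra).
    pose proof (Rle_abs (D * A)). rewrite Rabs_mult in H2. pose proof (Rabs_pos D). nra. }
  assert (HAMGM : 2 * D * (2 * a * (E' - E)) <= D * D + 4 * a * a * ((E - E') * (E - E')))
    by (pose proof (Rle_0_sqr (D - 2 * a * (E' - E))) as Hsq; unfold Rsqr in Hsq; nra).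
  assert (0 <= Om_lip * (4 * a * a * ((E - E') * (E - E')))).
  { apply Rmult_le_pos; [lra |]. pose proof (Rle_0_sqr (E - E')) as HE; unfold Rsqr in HE; nra. }
  nra.
Qed.

Section Asymptotics.

Variable Emax : R.
Hypothesis Emax_range : 0 <= Emax < 1.

(** * The branch W~^- and its behaviour at t = +oo *)

(* [bottom_eq E] and [- acos E] are the Omega-levels of the saddles S~_- and S~_+;
   for energies in [0, Emax] they lie [2 margin] above [-PI], resp. below [0].
   Past [settle_time d] the field is within [a gap d] of its limit at [t = +-oo],
   close enough to push away from [- acos E] and pull towards [bottom_eq E] at
   distance [d]. *)
Definition admissible (E : R) : Prop := 0 <= E <= Emax.
Definition margin : R := acos Emax / 2.
Definition bottom_eq (E : R) : R := - PI + acos E.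
Definition contraction_rate : R := a * sin margin.
Definition gap (d : R) : R := 2 * sin (d / 2) * sin margin.
Definition settle_time (d : R) : R := Rmax (Om_lip / contraction_rate) (Om_dev / (a * gap d)).
Definition trap_time : R := settle_time margin.
Definition in_window (y : R) : Prop := - PI + margin <= y <= - margin.

Lemma margin_bounds : 0 < margin <= PI / 4.
Proof.
  unfold margin. split.
  - pose proof (acos_bound_lt Emax ltac:(lra)). lra.
  - pose proof (acos_le_acos 0 Emax ltac:(lra) ltac:(lra) ltac:(lra)) as Hle.
    rewrite acos_0 in Hle. lra.
Qed.

Lemma acos_admissible (E : R) : admissible E -> 2 * margin <= acos E <= PI / 2.
Proof.
  intros HE. unfold admissible, margin in *. split.
  - replace (2 * (acos Emax / 2)) with (acos Emax) by field. apply acos_le_acos; lra.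
  - rewrite <- acos_0. apply acos_le_acos; lra.
Qed.

Lemma contraction_rate_pos : 0 < contraction_rate.
Proof.
  unfold contraction_rate. pose proof margin_bounds. pose proof PI_RGT_0.
  assert (0 < sin margin) by (apply sin_gt_0; lra). nra.
Qed.

Lemma gap_pos (d : R) : 0 < d <= margin -> 0 < gap d.
Proof.
  intros Hd. unfold gap. pose proof margin_bounds. pose proof PI_RGT_0.
  assert (0 < sin margin) by (apply sin_gt_0; lra).
  assert (0 < sin (d / 2)) by (apply sin_gt_0; lra). nra.
Qed.

Lemma gap_le_cos_sub (E d : R) : admissible E -> 0 < d <= margin -> gap d <= cos (acos E - d) - E.
Proof.
  intros HE Hd. pose proof (acos_admissible E HE). pose proof margin_bounds. pose proof PI_RGT_0.
  rewrite <- (cos_acos E) at 2 by (unfold admissible in HE; lra).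
  rewrite form2. unfold gap.
  replace ((acos E - d - acos E) / 2) with (- (d / 2)) by field.
  replace ((acos E - d + acos E) / 2) with (acos E - d / 2) by field.
  rewrite sin_neg.
  assert (0 < sin (d / 2)) by (apply sin_gt_0; lra).
  assert (sin margin <= sin (acos E - d / 2)) by (apply sin_margin_le; lra).
  nra.
Qed.

Lemma gap_le_sub_cos_add (E d : R) : admissible E -> 0 < d <= margin -> gap d <= E - cos (acos E + d).
Proof.
  intros HE Hd. pose proof (acos_admissible E HE). pose proof margin_bounds. pose proof PI_RGT_0.
  rewrite <- (cos_acos E) at 1 by (unfold admissible in HE; lra).
  rewrite form2. unfold gap.
  replace ((acos E - (acos E + d)) / 2) with (- (d / 2)) by field.
  replace ((acos E + (acos E + d)) / 2) with (acos E + d / 2) by field.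
  rewrite sin_neg.
  assert (0 < sin (d / 2)) by (apply sin_gt_0; lra).
  assert (sin margin <= sin (acos E + d / 2)) by (apply sin_margin_le; lra).
  nra.
Qed.

Lemma settle_time_pos (d : R) : 0 < settle_time d.
Proof.
  eapply Rlt_le_trans; [| apply Rmax_l].
  apply Rdiv_lt_0_compat; [apply Om_lip_pos | apply contraction_rate_pos].
Qed.

Lemma settle_time_dev (d t : R) : 0 < d <= margin -> settle_time d <= Rabs t ->
  Om_dev * cos (atan t) <= a * gap d.
Proof.
  intros Hd Ht. pose proof (gap_pos d Hd).
  assert (Hdev : 0 < Om_dev) by (unfold Om_dev; pose proof (Rabs_pos lam); pose proof (Rabs_pos gam); lra).
  assert (Hc : cos (atan t) <= a * gap d / Om_dev).
  { apply cos_atan_le; [apply Rdiv_lt_0_compat; nra |].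
    rewrite Rinv_div. eapply Rle_trans; [apply Rmax_r | exact Ht]. }
  apply (Rmult_le_compat_l Om_dev) in Hc; [| lra].
  replace (Om_dev * (a * gap d / Om_dev)) with (a * gap d) in Hc by (field; lra). exact Hc.
Qed.

Lemma settle_time_lip (d t : R) : settle_time d <= Rabs t ->
  Om_lip * cos (atan t) <= contraction_rate.
Proof.
  intros Ht. pose proof Om_lip_pos. pose proof contraction_rate_pos.
  assert (Hc : cos (atan t) <= contraction_rate / Om_lip).
  { apply cos_atan_le; [apply Rdiv_lt_0_compat; lra |].
    rewrite Rinv_div. eapply Rle_trans; [apply Rmax_l | exact Ht]. }
  apply (Rmult_le_compat_l Om_lip) in Hc; [| lra].
  replace (Om_lip * (contraction_rate / Om_lip)) with contraction_rate in Hc by (field; lra). exact Hc.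
Qed.

Lemma om_rhs_pos_above_top (E d t : R) : admissible E -> 0 < d <= margin -> settle_time d <= t ->
  0 < om_rhs E t (- acos E + d).
Proof.
  intros HE Hd Ht. pose proof (settle_time_pos d).
  pose proof (settle_time_dev d t Hd ltac:(rewrite Rabs_right; lra)).
  pose proof (Om_field_near_top E (atan t) (- acos E + d)
                (conj (atan_nonneg t ltac:(lra)) (proj2 (atan_bounds_le t)))) as Hdev.
  replace (- acos E + d) with (- (acos E - d)) in Hdev |- * by ring. rewrite cos_neg in Hdev.
  apply Rabs_le_between in Hdev. pose proof (gap_le_cos_sub E d HE Hd). pose proof (gap_pos d Hd).
  unfold om_rhs. nra.
Qed.

Lemma om_rhs_neg_below_top (E d t : R) : admissible E -> 0 < d <= margin -> settle_time d <= t ->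
  om_rhs E t (- acos E - d) < 0.
Proof.
  intros HE Hd Ht. pose proof (settle_time_pos d).
  pose proof (settle_time_dev d t Hd ltac:(rewrite Rabs_right; lra)).
  pose proof (Om_field_near_top E (atan t) (- acos E - d)
                (conj (atan_nonneg t ltac:(lra)) (proj2 (atan_bounds_le t)))) as Hdev.
  replace (- acos E - d) with (- (acos E + d)) in Hdev |- * by ring. rewrite cos_neg in Hdev.
  apply Rabs_le_between in Hdev. pose proof (gap_le_sub_cos_add E d HE Hd). pose proof (gap_pos d Hd).
  unfold om_rhs. nra.
Qed.

Lemma om_rhs_neg_above_bottom (E d t : R) : admissible E -> 0 < d <= margin -> t <= - settle_time d ->
  om_rhs E t (bottom_eq E + d) < 0.
Proof.
  intros HE Hd Ht. pose proof (settle_time_pos d).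
  pose proof (settle_time_dev d t Hd ltac:(rewrite Rabs_left; lra)).
  pose proof (Om_field_near_bottom E (atan t) (bottom_eq E + d)
                (conj (proj1 (atan_bounds_le t)) (atan_nonpos t ltac:(lra)))) as Hdev.
  unfold bottom_eq in *. replace (- PI + acos E + d) with (- PI + (acos E + d)) in Hdev |- * by ring.
  rewrite cos_neg_PI_add in Hdev.
  apply Rabs_le_between in Hdev. pose proof (gap_le_sub_cos_add E d HE Hd). pose proof (gap_pos d Hd).
  unfold om_rhs. nra.
Qed.

Lemma om_rhs_pos_below_bottom (E d t : R) : admissible E -> 0 < d <= margin -> t <= - settle_time d ->
  0 < om_rhs E t (bottom_eq E - d).
Proof.
  intros HE Hd Ht. pose proof (settle_time_pos d).
  pose proof (settle_time_dev d t Hd ltac:(rewrite Rabs_left; lra)).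
  pose proof (Om_field_near_bottom E (atan t) (bottom_eq E - d)
                (conj (proj1 (atan_bounds_le t)) (atan_nonpos t ltac:(lra)))) as Hdev.
  unfold bottom_eq in *. replace (- PI + acos E - d) with (- PI + (acos E - d)) in Hdev |- * by ring.
  rewrite cos_neg_PI_add in Hdev.
  apply Rabs_le_between in Hdev. pose proof (gap_le_cos_sub E d HE Hd). pose proof (gap_pos d Hd).
  unfold om_rhs. nra.
Qed.

Lemma solution_stays_near_bottom (E d : R) (y : R -> R) (t1 t2 : R) :
  admissible E -> 0 < d <= margin -> om_solution E y -> t1 <= t2 -> t2 <= - settle_time d ->
  Rabs (y t1 - bottom_eq E) <= d -> Rabs (y t2 - bottom_eq E) <= d.
Proof.
  intros HE Hd Hy H12 H2 H1. apply Rabs_le_between in H1.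
  assert (bottom_eq E - d <= y t2).
  { apply (barrier_ge y (fun t => om_rhs E t (y t)) t1 t2); [exact Hy | exact H12 | lra |].
    intros u Hu ->. apply om_rhs_pos_below_bottom; [exact HE | exact Hd | lra]. }
  assert (y t2 <= bottom_eq E + d).
  { apply (barrier_le y (fun t => om_rhs E t (y t)) t1 t2); [exact Hy | exact H12 | lra |].
    intros u Hu ->. apply om_rhs_neg_above_bottom; [exact HE | exact Hd | lra]. }
  apply Rabs_le_between. lra.
Qed.

Lemma solution_near_bottom_of_lim (E d : R) (y : R -> R) :
  admissible E -> 0 < d <= margin -> om_solution E y -> is_lim y m_infty (bottom_eq E) ->
  forall t, t <= - settle_time d -> Rabs (y t - bottom_eq E) <= d.
Proof.
  intros HE Hd Hy Hlim t Ht. destruct (is_lim_m_infty_eps y _ Hlim d ltac:(lra)) as [M HM].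
  apply (solution_stays_near_bottom E d y (Rmin (M - 1) t) t HE Hd Hy (Rmin_r _ _) Ht).
  left. apply HM. pose proof (Rmin_l (M - 1) t). lra.
Qed.

Lemma in_window_near_bottom (E y : R) : admissible E -> Rabs (y - bottom_eq E) <= margin -> in_window y.
Proof.
  intros HE Hy. apply Rabs_le_between in Hy. pose proof (acos_admissible E HE). pose proof margin_bounds.
  unfold in_window, bottom_eq in *. lra.
Qed.

Lemma om_rhs_contract (E t p q : R) : t <= - trap_time -> in_window p -> in_window q ->
  (om_rhs E t p - om_rhs E t q) * (p - q) <= - contraction_rate * ((p - q) * (p - q)).
Proof.
  intros Ht Hp Hq. pose proof margin_bounds. pose proof PI_RGT_0. pose proof (settle_time_pos margin).
  pose proof (settle_time_lip margin t ltac:(unfold trap_time in Ht; rewrite Rabs_left; lra)).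
  eapply Rle_trans.
  - apply (Om_field_contract E margin (atan t) p q); [lra | | exact Hp | exact Hq].
    split; [apply atan_bounds_le | apply atan_nonpos; unfold trap_time in Ht; lra].
  - apply Rmult_le_compat_r; [pose proof (Rle_0_sqr (p - q)) as Hsq; unfold Rsqr in Hsq; lra |].
    unfold contraction_rate in *. lra.
Qed.

Lemma sqr_dist_decay (E E' : R) (y z : R -> R) (s t : R) :
  om_solution E y -> om_solution E' z -> s <= t -> t <= - trap_time ->
  (forall u, s <= u <= t -> in_window (y u) /\ in_window (z u)) ->
  (y t - z t) * (y t - z t) - 4 * a * a * ((E - E') * (E - E')) / (contraction_rate * contraction_rate)
    <= exp (- contraction_rate * (t - s)) *
       ((y s - z s) * (y s - z s) - 4 * a * a * ((E - E') * (E - E')) / (contraction_rate * contraction_rate)).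
Proof.
  intros Hy Hz Hst Ht Hwin. pose proof contraction_rate_pos as Hk.
  set (c := 4 * a * a * ((E - E') * (E - E')) / (contraction_rate * contraction_rate)).
  apply (gronwall (fun u => (y u - z u) * (y u - z u) + - c) _ _ s t
           (fun u => sqr_dist_derive E E' y z _ u Hy Hz) Hst).
  intros u Hu. destruct (Hwin u Hu) as [Hyu Hzu].
  pose proof (om_rhs_contract E u (y u) (z u) ltac:(lra) Hyu Hzu) as Hcontr.
  set (D := y u - z u) in *. set (k := contraction_rate) in *.
  assert (HAMGM : 2 * D * (2 * a * (E' - E)) <= k * (D * D) + k * c).
  { unfold c. replace (k * (4 * a * a * ((E - E') * (E - E')) / (k * k)))
      with (4 * a * a * ((E - E') * (E - E')) / k) by (field; lra).
    apply (Rmult_le_reg_l k); [lra |].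
    replace (k * (k * (D * D) + 4 * a * a * ((E - E') * (E - E')) / k))
      with (k * k * (D * D) + 4 * a * a * ((E - E') * (E - E'))) by (field; lra).
    pose proof (Rle_0_sqr (k * D - 2 * a * (E' - E))) as Hsq. unfold Rsqr in Hsq. nra. }
  nra.
Qed.

Lemma window_sqr_dist_le (E E' : R) (y z : R -> R) :
  om_solution E y -> om_solution E' z ->
  (forall u, u <= - trap_time -> in_window (y u) /\ in_window (z u)) ->
  forall t, t <= - trap_time ->
  (y t - z t) * (y t - z t) <= 4 * a * a * ((E - E') * (E - E')) / (contraction_rate * contraction_rate).
Proof.
  intros Hy Hz Hwin t Ht. pose proof contraction_rate_pos as Hk.
  set (c := 4 * a * a * ((E - E') * (E - E')) / (contraction_rate * contraction_rate)).
  assert (Hc : 0 <= c).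
  { apply Rmult_le_pos; [pose proof (Rle_0_sqr (E - E')) as Hsq; unfold Rsqr in Hsq; nra |].
    left. apply Rinv_0_lt_compat. nra. }
  enough ((y t - z t) * (y t - z t) - c <= 0) by lra.
  apply (le_0_of_exp_decay contraction_rate (PI * PI) t _ Hk ltac:(pose proof PI_RGT_0; nra)).
  intros s Hs. eapply Rle_trans; [apply (sqr_dist_decay E E' y z s t Hy Hz Hs Ht) |].
  - intros u Hu. apply Hwin. lra.
  - apply Rmult_le_compat_l; [left; apply exp_pos |].
    destruct (Hwin s ltac:(lra)) as [Hys Hzs]. unfold in_window in *. pose proof margin_bounds.
    assert (Hd : - PI <= y s - z s <= PI) by lra.
    assert (0 <= (PI - (y s - z s)) * (PI + (y s - z s))) by (apply Rmult_le_pos; lra).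
    fold c. nra.
Qed.

Definition sensitivity (t : R) : R :=
  exp ((2 * Om_lip + 1) * (Rabs t + trap_time)) * (4 * a * a * (/ (contraction_rate * contraction_rate) + 1)).

(* Below [- trap_time] the contraction absorbs the energy mismatch; above it,
   Gronwall with the Lipschitz constant takes over. *)
Lemma sqr_dist_le (E E' : R) (y z : R -> R) :
  om_solution E y -> om_solution E' z ->
  (forall u, u <= - trap_time -> in_window (y u) /\ in_window (z u)) ->
  forall t, (y t - z t) * (y t - z t) <= sensitivity t * ((E - E') * (E - E')).
Proof.
  intros Hy Hz Hwin t. pose proof contraction_rate_pos as Hk. pose proof Om_lip_pos.
  pose proof (settle_time_pos margin) as HT. fold trap_time in HT.
  set (k := contraction_rate) in *. set (dE := (E - E') * (E - E')).
  assert (HdE : 0 <= dE) by (pose proof (Rle_0_sqr (E - E')) as Hsq; unfold Rsqr in Hsq; exact Hsq).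
  assert (Hkk : 0 <= / (k * k)) by (left; apply Rinv_0_lt_compat; nra).
  assert (Hexp : 1 <= exp ((2 * Om_lip + 1) * (Rabs t + trap_time))).
  { apply one_le_exp. pose proof (Rabs_pos t). apply Rmult_le_pos; lra. }
  unfold sensitivity. fold k.
  destruct (Rle_or_lt t (- trap_time)) as [Ht | Ht].
  - pose proof (window_sqr_dist_le E E' y z Hy Hz Hwin t Ht) as Hw. fold k dE in Hw.
    replace (4 * a * a * dE / (k * k)) with (4 * a * a * / (k * k) * dE) in Hw by (unfold Rdiv; ring).
    assert (0 <= 4 * a * a * (/ (k * k) + 1) * dE) by (apply Rmult_le_pos; [nra | exact HdE]).
    nra.
  - pose proof (sqr_dist_growth E E' y z (- trap_time) t Hy Hz ltac:(lra)) as Hg. fold dE in Hg.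
    pose proof (window_sqr_dist_le E E' y z Hy Hz Hwin (- trap_time) ltac:(lra)) as Hw. fold k dE in Hw.
    assert (Hexp' : exp ((2 * Om_lip + 1) * (t - - trap_time))
                    <= exp ((2 * Om_lip + 1) * (Rabs t + trap_time))).
    { apply exp_le_mono, Rmult_le_compat_l; [lra |]. pose proof (Rle_abs t). lra. }
    set (h0 := (y (- trap_time) - z (- trap_time)) * (y (- trap_time) - z (- trap_time))) in *.
    assert (Hh0 : h0 + 4 * a * a * dE <= 4 * a * a * (/ (k * k) + 1) * dE).
    { replace (4 * a * a * dE / (k * k)) with (4 * a * a * / (k * k) * dE) in Hw by (unfold Rdiv; ring).
      nra. }
    assert (0 <= h0) by (unfold h0; pose proof (Rle_0_sqr (y (- trap_time) - z (- trap_time))) as Hsq;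
                         unfold Rsqr in Hsq; exact Hsq).
    assert (0 <= a * a * dE) by (apply Rmult_le_pos; nra).
    pose proof (exp_pos ((2 * Om_lip + 1) * (t - - trap_time))).
    assert (exp ((2 * Om_lip + 1) * (t - - trap_time)) * (h0 + 4 * a * a * dE)
            <= exp ((2 * Om_lip + 1) * (Rabs t + trap_time)) * (4 * a * a * (/ (k * k) + 1) * dE))
      by (apply Rmult_le_compat; lra).
    nra.
Qed.

Definition approx_branch (E : R) (n : nat) : R -> R := picard_solution (om_rhs E) (- INR n) (bottom_eq E).

(* The Omega-component of the branch W~^-, in the time [t] with [xi = atan t]:
   the limit of the solutions leaving the saddle level at times [-n]. *)
Definition Wminus (E : R) : R -> R := pointwise_lim (approx_branch E).

Lemma approx_branch_solution (E : R) (n : nat) : om_solution E (approx_branch E n).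
Proof. apply om_solution_picard. Qed.

Lemma approx_branch_near_bottom (E d : R) (n : nat) (t : R) : admissible E -> 0 < d <= margin ->
  - INR n <= t -> t <= - settle_time d -> Rabs (approx_branch E n t - bottom_eq E) <= d.
Proof.
  intros HE Hd H1 H2. apply (solution_stays_near_bottom E d _ (- INR n) t HE Hd); try assumption.
  - apply approx_branch_solution.
  - unfold approx_branch. rewrite (proj1 (om_solution_picard E _ _)), Rminus_eq_0, Rabs_R0. lra.
Qed.

Definition approx_rate : R := 2 * Om_lip + 1 + contraction_rate.

Lemma approx_branch_sqr_dist_trapped (E : R) (m n : nat) (u : R) : admissible E -> (m <= n)%nat ->
  - INR m <= u <= - trap_time ->
  (approx_branch E n u - approx_branch E m u) * (approx_branch E n u - approx_branch E m u)
    <= exp (- contraction_rate * (u + INR m)) * (margin * margin).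
Proof.
  intros HE Hmn Hu. apply le_INR in Hmn. pose proof contraction_rate_pos. pose proof margin_bounds.
  unfold trap_time in Hu.
  set (y := approx_branch E n). set (z := approx_branch E m).
  assert (Hstart : (y (- INR m) - z (- INR m)) * (y (- INR m) - z (- INR m)) <= margin * margin).
  { unfold z, approx_branch. rewrite (proj1 (om_solution_picard E _ _)).
    pose proof (approx_branch_near_bottom E margin n (- INR m) HE ltac:(lra) ltac:(lra) ltac:(lra)) as Hy.
    apply Rabs_le_between in Hy. fold y in Hy. nra. }
  pose proof (sqr_dist_decay E E y z (- INR m) u (approx_branch_solution E n)
    (approx_branch_solution E m) ltac:(lra) ltac:(unfold trap_time; lra)) as Hdecay.
  replace (4 * a * a * ((E - E) * (E - E)) / (contraction_rate * contraction_rate)) with 0 in Hdecay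
    by (field; lra).
  rewrite !Rminus_0_r in Hdecay. replace (u - - INR m) with (u + INR m) in Hdecay by ring.
  eapply Rle_trans.
  - apply Hdecay. intros v Hv.
    split; apply (in_window_near_bottom E _ HE); apply approx_branch_near_bottom; auto; lra.
  - apply Rmult_le_compat_l; [left; apply exp_pos | exact Hstart].
Qed.

Lemma approx_branch_sqr_dist (E : R) (m n : nat) (t : R) : admissible E -> (m <= n)%nat ->
  trap_time <= INR m -> Rabs t <= INR m ->
  (approx_branch E n t - approx_branch E m t) * (approx_branch E n t - approx_branch E m t)
    <= exp (approx_rate * (Rabs t + trap_time)) * (margin * margin) * exp (- contraction_rate * INR m).
Proof.
  intros HE Hmn HTm Htm.
  pose proof contraction_rate_pos as Hk. pose proof Om_lip_pos. pose proof margin_bounds.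
  pose proof (settle_time_pos margin) as HT. fold trap_time in HT.
  pose proof (Rle_abs t). pose proof (Rle_abs (- t)) as Habs. rewrite Rabs_Ropp in Habs.
  assert (Hrate : approx_rate * (Rabs t + trap_time)
                  = (2 * Om_lip + 1) * (Rabs t + trap_time) + contraction_rate * (Rabs t + trap_time))
    by (unfold approx_rate; ring).
  assert (0 <= (2 * Om_lip + 1) * (Rabs t + trap_time)) by (apply Rmult_le_pos; lra).
  replace (exp (approx_rate * (Rabs t + trap_time)) * (margin * margin) * exp (- contraction_rate * INR m))
    with (exp (- contraction_rate * INR m) * exp (approx_rate * (Rabs t + trap_time)) * (margin * margin))
    by ring.
  destruct (Rle_or_lt t (- trap_time)) as [Ht | Ht].
  - eapply Rle_trans; [apply approx_branch_sqr_dist_trapped; [exact HE | exact Hmn | lra] |].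
    apply Rmult_le_compat_r; [nra |]. rewrite <- exp_plus. apply exp_le_mono.
    assert (contraction_rate * (- t) <= contraction_rate * (Rabs t + trap_time))
      by (apply Rmult_le_compat_l; lra).
    lra.
  - pose proof (sqr_dist_growth E E _ _ (- trap_time) t (approx_branch_solution E n)
      (approx_branch_solution E m) ltac:(lra)) as Hgrowth.
    replace (4 * a * a * ((E - E) * (E - E))) with 0 in Hgrowth by ring. rewrite !Rplus_0_r in Hgrowth.
    eapply Rle_trans; [exact Hgrowth |].
    eapply Rle_trans; [apply Rmult_le_compat_l;
      [left; apply exp_pos | apply approx_branch_sqr_dist_trapped; [exact HE | exact Hmn | lra]] |].
    rewrite <- Rmult_assoc, <- !exp_plus. apply Rmult_le_compat_r; [nra |]. apply exp_le_mono.
    assert (contraction_rate * trap_time <= contraction_rate * (Rabs t + trap_time))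
      by (apply Rmult_le_compat_l; lra).
    assert ((2 * Om_lip + 1) * (t - - trap_time) <= (2 * Om_lip + 1) * (Rabs t + trap_time))
      by (apply Rmult_le_compat_l; lra).
    lra.
Qed.

Lemma Wminus_CVU (E c : R) : admissible E -> CVU (approx_branch E) (Wminus E) c one_pos.
Proof.
  intros HE. pose proof contraction_rate_pos as Hk. pose proof Om_lip_pos.
  pose proof (settle_time_pos margin) as HT. fold trap_time in HT.
  set (k := contraction_rate) in *.
  set (Bc := exp (approx_rate * (Rabs c + 1 + trap_time)) * (margin * margin)).
  destruct (INR_archimed 1 (Rmax trap_time (Rabs c + 1)) ltac:(lra)) as [N HN].
  rewrite Rmult_1_r in HN.
  pose proof (Rmax_l trap_time (Rabs c + 1)). pose proof (Rmax_r trap_time (Rabs c + 1)).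
  apply (CVU_pointwise_lim _ (fun m => sqrt Bc * exp (- k / 2) ^ m) c N).
  - replace 0 with (sqrt Bc * 0) by ring. apply (is_lim_seq_scal_l _ _ 0), is_lim_seq_geom.
    rewrite Rabs_right by (left; apply exp_pos). rewrite <- exp_0. apply exp_increasing. lra.
  - intros m n s Hmn Hs. unfold Boule in Hs. simpl in Hs.
    assert (Hsc : Rabs s <= Rabs c + 1).
    { replace s with ((s - c) + c) by ring. pose proof (Rabs_triang (s - c) c). lra. }
    assert (HNm : INR N <= INR m) by (apply le_INR; lia).
    eapply Rle_trans; [apply Rabs_le_sqrt, (approx_branch_sqr_dist E m n s HE); [lia | lra | lra] |].
    assert (Hdecay : sqrt (exp (- k * INR m)) = exp (- k / 2) ^ m)
      by (rewrite sqrt_exp, <- exp_mult_INR; f_equal; field).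
    rewrite <- Hdecay, <- sqrt_mult_alt by (unfold Bc; apply Rmult_le_pos; [left; apply exp_pos | nra]).
    apply sqrt_le_1_alt. apply Rmult_le_compat_r; [left; apply exp_pos |].
    apply Rmult_le_compat_r; [nra |]. apply exp_le_mono, Rmult_le_compat_l;
      [unfold approx_rate; fold k; lra | lra].
Qed.

Lemma Wminus_solution (E : R) : admissible E -> om_solution E (Wminus E).
Proof.
  intros HE t. apply (is_derive_CVU_lim (om_rhs E) Om_lip (approx_branch E) (approx_branch E)).
  - intros; apply Om_field_lipschitz.
  - intros n; apply approx_branch_solution.
  - intros c; now apply Wminus_CVU.
  - intros c; now apply Wminus_CVU.
Qed.

Lemma Wminus_near_bottom (E d t : R) : admissible E -> 0 < d <= margin -> t <= - settle_time d ->
  Rabs (Wminus E t - bottom_eq E) <= d.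
Proof.
  intros HE Hd Ht. destruct (INR_archimed 1 (Rabs t) ltac:(lra)) as [N HN]. rewrite Rmult_1_r in HN.
  apply (Rabs_sub_lim_le _ _ _ _ N (is_lim_seq_of_CVU _ _ t one_pos (Wminus_CVU E t HE))).
  intros n Hn. apply approx_branch_near_bottom; [exact HE | exact Hd | | exact Ht].
  apply le_INR in Hn. pose proof (Rle_abs (- t)). rewrite Rabs_Ropp in *. lra.
Qed.

Lemma Wminus_alpha_limit (E : R) : admissible E -> is_lim (Wminus E) m_infty (bottom_eq E).
Proof.
  intros HE. apply is_lim_m_infty_of_eps. intros eps Heps. pose proof margin_bounds.
  set (d := Rmin (eps / 2) margin).
  assert (Hd : 0 < d <= margin) by (split; [apply Rmin_glb_lt; lra | apply Rmin_r]).
  exists (- settle_time d). intros x Hx.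
  apply (Rle_lt_trans _ d); [apply Wminus_near_bottom; [exact HE | exact Hd | lra] |].
  pose proof (Rmin_l (eps / 2) margin) as Hmin. fold d in Hmin. lra.
Qed.

Lemma Wminus_in_window (E t : R) : admissible E -> t <= - trap_time -> in_window (Wminus E t).
Proof.
  intros HE Ht. apply (in_window_near_bottom E _ HE). apply Wminus_near_bottom; [exact HE | | exact Ht].
  pose proof margin_bounds. lra.
Qed.

Lemma Wminus_unique (E : R) (y : R -> R) : admissible E -> om_solution E y ->
  is_lim y m_infty (bottom_eq E) -> forall t, y t = Wminus E t.
Proof.
  intros HE Hy Hlim t. pose proof margin_bounds.
  assert (Hwin : forall u, u <= - trap_time -> in_window (y u) /\ in_window (Wminus E u)).
  { intros u Hu. split; [| now apply Wminus_in_window].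
    apply (in_window_near_bottom E _ HE), (solution_near_bottom_of_lim E margin y HE); auto; lra. }
  pose proof (sqr_dist_le E E y (Wminus E) Hy (Wminus_solution E HE) Hwin t) as Hd.
  rewrite Rminus_eq_0, !Rmult_0_r in Hd.
  pose proof (Rle_0_sqr (y t - Wminus E t)) as Hsq. unfold Rsqr in Hsq. nra.
Qed.

Lemma Wminus_Rabs_sub_le (E E' t : R) : admissible E -> admissible E' ->
  Rabs (Wminus E t - Wminus E' t) <= sqrt (sensitivity t) * Rabs (E - E').
Proof.
  intros HE HE'. pose proof contraction_rate_pos.
  assert (HS : 0 <= sensitivity t).
  { unfold sensitivity. apply Rmult_le_pos; [left; apply exp_pos |].
    assert (0 <= / (contraction_rate * contraction_rate)) by (left; apply Rinv_0_lt_compat; nra). nra. }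
  rewrite <- (sqrt_Rsqr_abs (E - E')), <- sqrt_mult_alt by exact HS.
  apply Rabs_le_sqrt. unfold Rsqr.
  apply sqr_dist_le; [now apply Wminus_solution | now apply Wminus_solution |].
  intros u Hu. split; now apply Wminus_in_window.
Qed.

Lemma Wminus_stays_above (E d t1 t : R) : admissible E -> 0 < d <= margin ->
  settle_time d <= t1 -> t1 <= t -> - acos E + d < Wminus E t1 -> - acos E + d <= Wminus E t.
Proof.
  intros HE Hd H1 Ht Habove.
  apply (barrier_ge (Wminus E) (fun s => om_rhs E s (Wminus E s)) t1 t);
    [now apply Wminus_solution | exact Ht | lra |].
  intros u Hu ->. apply om_rhs_pos_above_top; [exact HE | exact Hd | lra].
Qed.

Lemma Wminus_stays_below (E d t1 t : R) : admissible E -> 0 < d <= margin ->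
  settle_time d <= t1 -> t1 <= t -> Wminus E t1 < - acos E - d -> Wminus E t <= - acos E - d.
Proof.
  intros HE Hd H1 Ht Hbelow.
  apply (barrier_le (Wminus E) (fun s => om_rhs E s (Wminus E s)) t1 t);
    [now apply Wminus_solution | exact Ht | lra |].
  intros u Hu ->. apply om_rhs_neg_below_top; [exact HE | exact Hd | lra].
Qed.

Definition escapes_above (E : R) : Prop :=
  exists d, 0 < d <= margin /\ exists t, settle_time d <= t /\ - acos E + d < Wminus E t.

Definition escapes_below (E : R) : Prop :=
  exists d, 0 < d <= margin /\ exists t, settle_time d <= t /\ Wminus E t < - acos E - d.

Lemma escapes_above_below_disjoint (E : R) : admissible E -> escapes_above E -> escapes_below E -> False.
Proof.
  intros HE [d1 [Hd1 [t1 [Ht1 H1]]]] [d2 [Hd2 [t2 [Ht2 H2]]]].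
  pose proof (Wminus_stays_above E d1 t1 (Rmax t1 t2) HE Hd1 Ht1 (Rmax_l _ _) H1).
  pose proof (Wminus_stays_below E d2 t2 (Rmax t1 t2) HE Hd2 Ht2 (Rmax_r _ _) H2).
  lra.
Qed.

Lemma Wminus_add_acos_continuous (E0 t : R) : admissible E0 -> forall eps, 0 < eps ->
  exists delta, 0 < delta /\ forall E, admissible E -> Rabs (E - E0) < delta ->
    Rabs ((Wminus E t + acos E) - (Wminus E0 t + acos E0)) < eps.
Proof.
  intros HE0 eps Heps.
  assert (Hacos : continuity_pt acos E0)
    by (apply derivable_continuous_pt, derivable_pt_acos; unfold admissible in HE0; lra).
  destruct (continuity_pt_eps acos E0 Hacos (eps / 2) ltac:(lra)) as [d1 [Hd1 Hacos_d1]].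
  set (S := sqrt (sensitivity t)). assert (HS : 0 <= S) by apply sqrt_pos.
  set (d2 := eps / (2 * (S + 1))). assert (Hd2 : 0 < d2) by (apply Rdiv_lt_0_compat; lra).
  exists (Rmin d1 d2). split; [now apply Rmin_glb_lt |].
  intros E HE Hdist. pose proof (Rmin_l d1 d2). pose proof (Rmin_r d1 d2).
  specialize (Hacos_d1 E ltac:(lra)).
  pose proof (Wminus_Rabs_sub_le E E0 t HE HE0) as HW. fold S in HW.
  assert (S * Rabs (E - E0) <= S * d2) by (apply Rmult_le_compat_l; lra).
  assert (S * d2 < eps / 2) by (unfold d2; apply (Rmult_lt_reg_r (2 * (S + 1))); [lra |]; field_simplify; nra).
  replace (Wminus E t + acos E - (Wminus E0 t + acos E0))
    with ((Wminus E t - Wminus E0 t) + (acos E - acos E0)) by ring.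
  pose proof (Rabs_triang (Wminus E t - Wminus E0 t) (acos E - acos E0)). lra.
Qed.

Lemma escapes_above_open (E0 : R) : admissible E0 -> escapes_above E0 ->
  exists e, 0 < e /\ forall E, admissible E -> Rabs (E - E0) < e -> escapes_above E.
Proof.
  intros HE0 [d [Hd [t [Ht Habove]]]].
  destruct (Wminus_add_acos_continuous E0 t HE0 (Wminus E0 t + acos E0 - d) ltac:(lra)) as [e [He Hcont]].
  exists e. split; [exact He |]. intros E HE HEe. exists d. split; [exact Hd |]. exists t. split; [exact Ht |].
  specialize (Hcont E HE HEe). apply Rabs_lt_between in Hcont. lra.
Qed.

Lemma escapes_below_open (E0 : R) : admissible E0 -> escapes_below E0 ->
  exists e, 0 < e /\ forall E, admissible E -> Rabs (E - E0) < e -> escapes_below E.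
Proof.
  intros HE0 [d [Hd [t [Ht Hbelow]]]].
  destruct (Wminus_add_acos_continuous E0 t HE0 (- d - Wminus E0 t - acos E0) ltac:(lra)) as [e [He Hcont]].
  exists e. split; [exact He |]. intros E HE HEe. exists d. split; [exact Hd |]. exists t. split; [exact Ht |].
  specialize (Hcont E HE HEe). apply Rabs_lt_between in Hcont. lra.
Qed.

Lemma escapes_above_of_lim (E l : R) : admissible E -> is_lim (Wminus E) p_infty l -> - acos E < l ->
  escapes_above E.
Proof.
  intros HE Hlim Hl. pose proof margin_bounds. set (eps := (l + acos E) / 2).
  destruct (is_lim_p_infty_eps _ _ Hlim eps ltac:(unfold eps; lra)) as [M HM].
  set (d := Rmin margin (eps / 2)).
  assert (Hd : 0 < d <= margin) by (split; [apply Rmin_glb_lt; unfold eps; lra | apply Rmin_l]).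
  exists d. split; [exact Hd |]. exists (Rmax (M + 1) (settle_time d)). split; [apply Rmax_r |].
  specialize (HM (Rmax (M + 1) (settle_time d)) ltac:(pose proof (Rmax_l (M + 1) (settle_time d)); lra)).
  apply Rabs_lt_between in HM. pose proof (Rmin_r margin (eps / 2)) as Hmin. fold d in Hmin.
  unfold eps in *. lra.
Qed.

Lemma escapes_below_of_lim (E l : R) : admissible E -> is_lim (Wminus E) p_infty l -> l < - acos E ->
  escapes_below E.
Proof.
  intros HE Hlim Hl. pose proof margin_bounds. set (eps := (- acos E - l) / 2).
  destruct (is_lim_p_infty_eps _ _ Hlim eps ltac:(unfold eps; lra)) as [M HM].
  set (d := Rmin margin (eps / 2)).
  assert (Hd : 0 < d <= margin) by (split; [apply Rmin_glb_lt; unfold eps; lra | apply Rmin_l]).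
  exists d. split; [exact Hd |]. exists (Rmax (M + 1) (settle_time d)). split; [apply Rmax_r |].
  specialize (HM (Rmax (M + 1) (settle_time d)) ltac:(pose proof (Rmax_l (M + 1) (settle_time d)); lra)).
  apply Rabs_lt_between in HM. pose proof (Rmin_r margin (eps / 2)) as Hmin. fold d in Hmin.
  unfold eps in *. lra.
Qed.

Lemma saddles_connector_of_not_escaping (E : R) : admissible E ->
  ~ escapes_above E -> ~ escapes_below E -> saddles_connector a gam lam E.
Proof.
  intros HE Habove Hbelow. exists atan, (Wminus E). split; [| split].
  - intros t. split; [apply atan_bound | split; [apply atan_is_xi_orbit | now apply Wminus_solution]].
  - split; [apply is_lim_atan_m_infty | now apply Wminus_alpha_limit].
  - exists 0%Z. split; [apply is_lim_atan_p_infty |].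
    replace (- acos E + 2 * PI * IZR 0) with (- acos E) by (simpl; ring).
    apply is_lim_p_infty_of_eps. intros eps Heps. pose proof margin_bounds.
    set (d := Rmin (eps / 2) margin).
    assert (Hd : 0 < d <= margin) by (split; [apply Rmin_glb_lt; lra | apply Rmin_r]).
    pose proof (Rmin_l (eps / 2) margin) as Hmin. fold d in Hmin.
    exists (settle_time d). intros t Ht. apply Rabs_lt_between.
    assert (- acos E - d <= Wminus E t).
    { apply Rnot_lt_le. intros Hlt. apply Hbelow. exists d. split; [exact Hd |]. exists t. split; [lra | exact Hlt]. }
    assert (Wminus E t <= - acos E + d).
    { apply Rnot_lt_le. intros Hlt. apply Habove. exists d. split; [exact Hd |]. exists t. split; [lra | exact Hlt]. }
    lra.
Qed.

Lemma Wminus_omega_of_corridor (E : R) (k : Z) : admissible E -> corridor a gam lam E k ->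
  is_lim (Wminus E) p_infty (acos E - 2 * PI * IZR k).
Proof.
  intros HE [_ [x [w [Horb [[_ Halpha] [_ Homega]]]]]].
  destruct (om_solution_of_orbit E x w Horb) as [c Hsol].
  apply (is_lim_ext (fun u => w (u - c))); [| apply (is_lim_shift w p_infty); [now right | exact Homega]].
  apply (Wminus_unique E _ HE Hsol), (is_lim_shift w m_infty); [now left | exact Halpha].
Qed.

Lemma escapes_above_of_corridor (E : R) : admissible E -> corridor a gam lam E 0 -> escapes_above E.
Proof.
  intros HE Hcorr. apply (escapes_above_of_lim E _ HE (Wminus_omega_of_corridor E 0 HE Hcorr)).
  pose proof (acos_admissible E HE). pose proof margin_bounds. simpl. lra.
Qed.

Lemma escapes_below_of_corridor (E : R) (k : Z) : admissible E -> (1 <= k)%Z -> corridor a gam lam E k ->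
  escapes_below E.
Proof.
  intros HE Hk Hcorr. apply (escapes_below_of_lim E _ HE (Wminus_omega_of_corridor E k HE Hcorr)).
  pose proof (acos_admissible E HE). pose proof PI_RGT_0. apply IZR_le in Hk. nra.
Qed.

Lemma saddles_connector_between (E1 : R) : 0 <= E1 < Emax -> escapes_above E1 -> escapes_below Emax ->
  exists E, E1 < E < Emax /\ saddles_connector a gam lam E.
Proof.
  intros HE1 Habove Hbelow.
  assert (Hadm : forall E, E1 <= E <= Emax -> admissible E) by (intros E HE; unfold admissible; lra).
  destruct (interval_not_covered escapes_above escapes_below E1 Emax ltac:(lra) Habove Hbelow)
    as [E [HE [Hnot_above Hnot_below]]].
  - intros E HE Hesc. destruct (escapes_above_open E (Hadm E HE) Hesc) as [e [He Hopen]].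
    exists e. split; [exact He |]. intros E' HE' HEE'. apply Hopen; [apply Hadm, HE' | exact HEE'].
  - intros E HE Hesc. destruct (escapes_below_open E (Hadm E HE) Hesc) as [e [He Hopen]].
    exists e. split; [exact He |]. intros E' HE' HEE'. apply Hopen; [apply Hadm, HE' | exact HEE'].
  - intros E HE. apply (escapes_above_below_disjoint E (Hadm E HE)).
  - exists E. split; [| apply saddles_connector_of_not_escaping; [apply Hadm |..]; assumption].
    split; apply Rnot_le_lt; intros Hle;
      [assert (E = E1) as -> by lra | assert (E = Emax) as -> by lra]; contradiction.
Qed.

End Asymptotics.

End OmegaFlow.

Theorem corollary2 (a gam lam E1 E2 : R) :
  0 < a < 1 / 2 ->
  - sqrt (2 * a * (1 - 2 * a)) < gam < 0 ->
  lam <= -1 + a ->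
  0 <= E1 -> E1 < E2 -> E2 < 1 ->
  corridor a gam lam E1 0%Z ->
  (exists k : Z, (1 <= k)%Z /\ corridor a gam lam E2 k) ->
  exists E : R, E1 < E < E2 /\ saddles_connector a gam lam E.
Proof.
  intros [Ha _] _ _ HE1 HE12 HE2 Hcorr1 [k [Hk Hcorr2]].
  assert (HEmax : 0 <= E2 < 1) by lra.
  apply (saddles_connector_between a gam lam Ha E2 HEmax E1); [lra | |].
  - apply (escapes_above_of_corridor a gam lam Ha E2 HEmax E1); [unfold admissible; lra | exact Hcorr1].
  - apply (escapes_below_of_corridor a gam lam Ha E2 HEmax E2 k);
      [unfold admissible; lra | exact Hk | exact Hcorr2].
Qed.
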